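(* Let $K$ be a finitely generated group and $G=\mathbb{Z}\wr K=W\rtimes K$ with $W=\bigoplus_K\mathbb{Z}$. Then: (1) Every finitely generated subgroup $H$ of $W$ is undistorted in $G$, i.e. $\mathrm{Dist}^G_H(n)\simeq n$. (2) If $H$ is a finitely generated subgroup of $K$, then $\mathrm{Dist}^G_H\simeq\mathrm{Dist}^K_H$. In particular $\mathrm{Dist}^G_K(n)\simeq n$. (3) If $\hat H\cong\mathbb{Z}$ is a subgroup of $G$ with $\mathrm{Dist}^G_{\hat H}(n)\not\simeq n$, then there exists a subgroup $H\cong\mathbb{Z}$ of $G$ which is either contained in $W$ or contained in $K$ such that $\mathrm{Dist}^G_H\simeq\mathrm{Dist}^G_{\hat H}$.
   Context: Wreath products: for groups $L,K$, $L\wr K=W\rtimes K$ with $W=\bigoplus_{K}L$. Elements are pairs $(f,k)$ with $f:K\to L$ finitely supported and $k\in K$, with multiplication $(f,k)(\hat f,\hat k)=(f+\hat f^{k},k\hat k)$, where $\hat f^{k}(v)=\hat f(vk^{-1})$. $K$ is identified with $\{(0,k)\}$ and $L$ with the summand of $W$ indexed by $e\in K$; $G$ is generated by a generator of $\mathbb{Z}$ together with a finite generating set of $K$. Distortion: if $G$ has finite generating set $S$ and a subgroup $H$ has finite generating set $T$, $\mathrm{Dist}^G_H(n)=\max\{|g|_T : g\in H,\ |g|_S\le n\}$, where $|g|_S$ is the length of a shortest word on $S^{\pm1}$ representing $g$. For $f,g:\mathbb{N}\to\mathbb{N}$, $f\preceq g$ means there is $C>0$ with $f(n)\le Cg(Cn+C)+Cn+C$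 for all $n$; $f\simeq g$ means $f\preceq g$ and $g\preceq f$. Undistorted means distortion $\simeq n$. *)

From Stdlib Require Import ZArith List ClassicalEpsilon.
Import ListNotations.
Set Implicit Arguments.

Record GOps := { gT :> Type; gmul : gT -> gT -> gT; ginv : gT -> gT; gone : gT }.

Record Grp := {
  gops :> GOps;
  mulA : forall x y z : gops, gmul gops x (gmul gops y z) = gmul gops (gmul gops x y) z;
  mul1g : forall x : gops, gmul gops (gone gops) x = x;
  mulg1 : forall x : gops, gmul gops x (gone gops) = x;
  mulVg : forall x : gops, gmul gops (ginv gops x) x = gone gops;
  mulgV : forall x : gops, gmul gops x (ginv gops x) = gone gops }.

(** Words: letters (b, s), b = true meaning s^{-1}. *)
Fixpoint eval_word (G : GOps) (w : list (bool * G)) : G :=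
  match w with
  | [] => gone G
  | (b, x) :: w' => gmul G (if b then ginv G x else x) (eval_word G w')
  end.

Definition word_over (G : GOps) (S : list G) (w : list (bool * G)) : Prop :=
  forall p, In p w -> In (snd p) S.

Definition word_length (G : GOps) (S : list G) (g : G) : nat :=
  epsilon (inhabits 0%nat) (fun n =>
    (exists w, word_over G S w /\ length w = n /\ eval_word G w = g) /\
    (forall w, word_over G S w -> eval_word G w = g -> (n <= length w)%nat)).

Definition is_subgroup (G : GOps) (H : G -> Prop) : Prop :=
  H (gone G) /\ (forall x y, H x -> H y -> H (gmul G x y)) /\
  (forall x, H x -> H (ginv G x)).

Definition generates (G : GOps) (T : list G) (H : G -> Prop) : Prop :=
  (forall t, In t T -> H t) /\
  (forall g, H g <-> exists w, word_over G T w /\ eval_word G w = g).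

Definition dist (G : GOps) (S : list G) (H : G -> Prop) (T : list G) (n : nat) : nat :=
  epsilon (inhabits 0%nat) (fun d =>
    (exists g, H g /\ (word_length G S g <= n)%nat /\ word_length G T g = d) /\
    (forall g, H g -> (word_length G S g <= n)%nat -> (word_length G T g <= d)%nat)).

Definition preceq (f g : nat -> nat) : Prop :=
  exists C : nat, (0 < C)%nat /\
    forall n, (f n <= C * g (C * n + C) + C * n + C)%nat.

Definition simeq (f g : nat -> nat) : Prop := preceq f g /\ preceq g f.

Definition iso_Z (G : GOps) (H : G -> Prop) : Prop :=
  exists phi : Z -> G,
    (forall a b, phi (a + b)%Z = gmul G (phi a) (phi b)) /\
    (forall a b, phi a = phi b -> a = b) /\
    (forall g, H g <-> exists n, phi n = g).

Section Wreath.
Variable K : Grp.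

Definition fin_supp (f : K -> Z) : Prop :=
  exists l : list K, forall v, f v <> 0%Z -> In v l.

Definition Wfun := { f : K -> Z | fin_supp f }.

Definition act (f : K -> Z) (k : K) : K -> Z := fun v => f (gmul K v (ginv K k)).

Lemma fin_supp_act f k : fin_supp f -> fin_supp (act f k).
Proof.
  intros [l Hl]. exists (map (fun u => gmul K u k) l). intros v Hv.
  apply in_map_iff. exists (gmul K v (ginv K k)). split.
  - rewrite <- mulA, mulVg, mulg1. reflexivity.
  - apply Hl. exact Hv.
Qed.

Lemma fin_supp_add f g : fin_supp f -> fin_supp g -> fin_supp (fun v => (f v + g v)%Z).
Proof.
  intros [l Hl] [m Hm]. exists (l ++ m). intros v Hv. apply in_or_app.
  destruct (Z.eq_dec (f v) 0) as [E|E].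
  - right. apply Hm. intro E'. apply Hv. rewrite E, E'. reflexivity.
  - left. apply Hl. exact E.
Qed.

Lemma fin_supp_opp f : fin_supp f -> fin_supp (fun v => (- f v)%Z).
Proof.
  intros [l Hl]. exists l. intros v Hv. apply Hl. intro E. apply Hv. rewrite E. reflexivity.
Qed.

Lemma fin_supp_zero : fin_supp (fun _ => 0%Z).
Proof. exists []. intros v Hv. exfalso. apply Hv. reflexivity. Qed.

Definition delta_e : K -> Z :=
  fun v => if excluded_middle_informative (v = gone K) then 1%Z else 0%Z.

Lemma fin_supp_delta : fin_supp delta_e.
Proof.
  exists [gone K]. intros v. unfold delta_e.
  destruct (excluded_middle_informative (v = gone K)) as [E|E].
  - intros _. left. symmetry. exact E.
  - intros H. exfalso. apply H. reflexivity.
Qed.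

Definition wr_carrier := (Wfun * K)%type.

Definition wr_mul (x y : wr_carrier) : wr_carrier :=
  (exist _ (fun v => (proj1_sig (fst x) v + act (proj1_sig (fst y)) (snd x) v)%Z)
     (fin_supp_add (proj2_sig (fst x)) (fin_supp_act (snd x) (proj2_sig (fst y)))),
   gmul K (snd x) (snd y)).

Definition wr_inv (x : wr_carrier) : wr_carrier :=
  (exist _ (fun v => (- act (proj1_sig (fst x)) (ginv K (snd x)) v)%Z)
     (fin_supp_opp (fin_supp_act (ginv K (snd x)) (proj2_sig (fst x)))),
   ginv K (snd x)).

Definition wr_one : wr_carrier := (exist _ (fun _ => 0%Z) fin_supp_zero, gone K).

Definition wreath : GOps := {| gT := wr_carrier; gmul := wr_mul; ginv := wr_inv; gone := wr_one |}.

Definition embK (k : K) : wreath := (exist _ (fun _ => 0%Z) fin_supp_zero, k).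

Definition wr_genZ : wreath := (exist _ delta_e fin_supp_delta, gone K).

Definition inW (g : wreath) : Prop := snd g = gone K.

Definition inK (g : wreath) : Prop := exists k, g = embK k.

Definition wr_gens (SK : list K) : list wreath := wr_genZ :: map embK SK.

End Wreath.

(* The length of an element of Z wr K dominates both the l1-norm of its lamp configuration
   (each generator changes one lamp by one or moves the cursor) and the length of its cursor in
   K; conversely a configuration plus a cursor can be written with a word of comparable length.
   (1) Words of a subgroup of W are integer combinations of finitely many configurations, and
   a finitely generated subgroup of Z^l is undistorted for the l1-norm.  (2) Words over K embed
   and project isometrically.  (3) If phi : Z -> G is injective with cursor kappa, either kappa
   has a kernel and the lamps grow linearly along a period, or the lamps of phi a are the
   coboundary g - g.kappa(a) of a potential g; g is finitely supported unless some orbit sum is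
   nonzero, which again forces linear growth.  So a distorted phi is conjugate to kappa up to
   bounded length, and the distorted cyclic subgroup can always be taken inside K. *)
From Stdlib Require Import ZArith Znumtheory List Lia ClassicalEpsilon Classical
  FunctionalExtensionality ProofIrrelevance PropExtensionality.
Import ListNotations.
Set Implicit Arguments.
Local Open Scope nat_scope.

Lemma exists_least_nat (P : nat -> Prop) :
  (exists n, P n) -> exists n, P n /\ forall m, P m -> n <= m.
Proof.
  intros [n Pn]. induction n as [n IH] using (well_founded_induction lt_wf).
  destruct (classic (exists m, P m /\ m < n)) as [[m [Pm Hm]]|Nm].
  - exact (IH m Hm Pm).
  - exists n. split; [exact Pn|]. intros m Pm.
    destruct (Nat.lt_ge_cases m n); [exfalso; eauto|auto].
Qed.

Lemma exists_greatest_nat (P : nat -> Prop) (B : nat) :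
  (exists n, P n) -> (forall n, P n -> n <= B) ->
  exists n, P n /\ forall m, P m -> m <= n.
Proof.
  intros [n0 Pn0] HB.
  destruct (exists_least_nat (fun d => forall m, P m -> m <= d)) as [d [Hd Hmin]].
  { exists B. exact HB. }
  exists d. split; [|exact Hd].
  apply NNPP. intros Nd. destruct d as [|d].
  - assert (n0 = 0) by (specialize (Hd n0 Pn0); lia). subst. contradiction.
  - assert (Hd' : forall m, P m -> m <= d).
    { intros m Pm. specialize (Hd m Pm).
      destruct (Nat.eq_dec m (S d)); [subst; contradiction|lia]. }
    specialize (Hmin d Hd'). lia.
Qed.

Definition reachable (G : GOps) (S : list G) (g : G) : Prop :=
  exists w, word_over G S w /\ eval_word G w = g.

Lemma word_over_app (G : GOps) (S : list G) (w1 w2 : list (bool * G)) :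
  word_over G S w1 -> word_over G S w2 -> word_over G S (w1 ++ w2).
Proof. intros H1 H2 p Hp. apply in_app_or in Hp as [Hp|Hp]; auto. Qed.

Lemma word_over_rev (G : GOps) (S : list G) (w : list (bool * G)) :
  word_over G S w -> word_over G S (rev w).
Proof. intros Ow p Hp. apply Ow, in_rev, Hp. Qed.

Lemma word_over_cons_inv (G : GOps) (S : list G) p (w : list (bool * G)) :
  word_over G S (p :: w) -> In (snd p) S /\ word_over G S w.
Proof. intros H. split; [apply H; left; reflexivity|intros q Hq; apply H; right; exact Hq]. Qed.

Lemma word_length_spec (G : GOps) (S : list G) (g : G) : reachable G S g ->
  (exists w, word_over G S w /\ length w = word_length G S g /\ eval_word G w = g) /\
  (forall w, word_over G S w -> eval_word G w = g -> word_length G S g <= length w).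
Proof.
  intros [w0 [O0 E0]]. unfold word_length. apply epsilon_spec.
  destruct (exists_least_nat
              (fun n => exists w, word_over G S w /\ length w = n /\ eval_word G w = g))
    as [n [[w [Ow [Lw Ew]]] Hmin]].
  { exists (length w0). eauto. }
  exists n. split; [eauto|]. intros w' Ow' Ew'. apply Hmin. eauto.
Qed.

Lemma word_length_le (G : GOps) (S : list G) (w : list (bool * G)) :
  word_over G S w -> word_length G S (eval_word G w) <= length w.
Proof.
  intros Ow. apply (proj2 (word_length_spec (ex_intro _ w (conj Ow eq_refl)))); auto.
Qed.

Lemma word_length_one (G : GOps) (S : list G) : word_length G S (gone G) = 0.
Proof.
  assert (Onil : word_over G S []) by (intros p []).
  assert (H := word_length_le Onil). simpl in H. lia.
Qed.

Fixpoint words_of_length (G : GOps) (S : list G) (n : nat) : list (list (bool * G)) :=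
  match n with
  | O => [[]]
  | S n' => flat_map (fun w => flat_map (fun s => [(false, s) :: w; (true, s) :: w]) S)
                     (words_of_length G S n')
  end.

Lemma in_words_of_length (G : GOps) (S : list G) w :
  word_over G S w -> In w (words_of_length G S (length w)).
Proof.
  induction w as [|[b s] w IH]; simpl; intros Ow; [auto|].
  destruct (word_over_cons_inv Ow) as [Hs Ow'].
  apply in_flat_map. exists w. split; [exact (IH Ow')|].
  apply in_flat_map. exists s. split; [exact Hs|]. destruct b; simpl; auto.
Qed.

Definition words_upto (G : GOps) (S : list G) (n : nat) : list (list (bool * G)) :=
  flat_map (words_of_length G S) (seq 0 (Datatypes.S n)).

Lemma in_words_upto (G : GOps) (S : list G) w n :
  word_over G S w -> length w <= n -> In w (words_upto G S n).
Proof.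
  intros Ow Lw. apply in_flat_map. exists (length w).
  split; [apply in_seq; lia|exact (in_words_of_length Ow)].
Qed.

Lemma le_list_max x l : In x l -> x <= list_max l.
Proof.
  intros Hx. assert (H : list_max l <= list_max l) by lia.
  apply list_max_le, Forall_forall with (x := x) in H; auto.
Qed.

Definition is_dist_value (G : GOps) (S : list G) (H : G -> Prop) (T : list G) (n d : nat) :=
  (exists g, H g /\ word_length G S g <= n /\ word_length G T g = d) /\
  (forall g, H g -> word_length G S g <= n -> word_length G T g <= d).

(* The maximum exists because only the finitely many elements of S-length at most n compete. *)
Lemma dist_spec (G : GOps) (S : list G) (H : G -> Prop) (T : list G) (n : nat) (g0 : G) :
  (forall g, H g -> reachable G S g) -> H g0 -> word_length G S g0 <= n ->
  is_dist_value G S H T n (dist G S H T n).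
Proof.
  intros HR H0 L0. unfold dist. apply epsilon_spec.
  destruct (exists_greatest_nat
              (fun d => exists g, H g /\ word_length G S g <= n /\ word_length G T g = d)
              (B := list_max (map (fun w => word_length G T (eval_word G w)) (words_upto G S n))))
    as [d [Pd Hmax]].
  - eauto.
  - intros d [g [Hg [Lg <-]]].
    destruct (word_length_spec (HR g Hg)) as [[w [Ow [Lw Ew]]] _].
    apply le_list_max, in_map_iff. exists w.
    split; [congruence|apply in_words_upto; [exact Ow|lia]].
  - exists d. split; [exact Pd|]. intros g Hg Lg. apply Hmax. eauto.
Qed.

Lemma dist_monotone (G : GOps) (S : list G) (H : G -> Prop) (T : list G) (g0 : G) :
  (forall g, H g -> reachable G S g) -> H g0 -> word_length G S g0 = 0 ->
  forall n n', n <= n' -> dist G S H T n <= dist G S H T n'.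
Proof.
  intros HR H0 L0 n n' Le.
  destruct (@dist_spec G S H T n g0 HR H0 ltac:(lia)) as [[g [Hg [Lg <-]]] _].
  apply (proj2 (@dist_spec G S H T n' g0 HR H0 ltac:(lia))); [exact Hg|lia].
Qed.

Lemma preceq_refl_monotone (f : nat -> nat) :
  (forall n n', n <= n' -> f n <= f n') -> preceq f f.
Proof. intros Hf. exists 1. split; [lia|]. intros n. specialize (Hf n (1 * n + 1)). lia. Qed.

Lemma preceq_id (f : nat -> nat) : preceq (fun n => n) f.
Proof. exists 1. split; [lia|]. intros n. lia. Qed.

Section GroupFacts.
Variable K : Grp.
Notation m := (gmul K).
Notation i := (ginv K).
Notation e := (gone K).

Lemma mulg_cancel_l a x y : m a x = m a y -> x = y.
Proof. intros H. rewrite <- (mul1g K x), <- (mul1g K y), <- (mulVg K a), <- !mulA, H. reflexivity. Qed.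

Lemma mulg_cancel_r a x y : m x a = m y a -> x = y.
Proof. intros H. rewrite <- (mulg1 K x), <- (mulg1 K y), <- (mulgV K a), !mulA, H. reflexivity. Qed.

Lemma inv_unique x y : m x y = e -> y = i x.
Proof. intros H. apply (mulg_cancel_l x). rewrite H, mulgV. reflexivity. Qed.

Lemma invgK x : i (i x) = x.
Proof. symmetry. apply inv_unique, mulVg. Qed.

Lemma invg1 : i e = e.
Proof. symmetry. apply inv_unique, mul1g. Qed.

Lemma invgM x y : i (m x y) = m (i y) (i x).
Proof. symmetry. apply inv_unique. rewrite mulA, <- (mulA K x y), mulgV, mulg1, mulgV. reflexivity. Qed.

Lemma mulKVg x y : m x (m (i x) y) = y.
Proof. rewrite mulA, mulgV, mul1g. reflexivity. Qed.

Lemma mulgKV x y : m (m y (i x)) x = y.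
Proof. rewrite <- mulA, mulVg, mulg1. reflexivity. Qed.

Lemma eval_word_app (w1 w2 : list (bool * K)) :
  eval_word K (w1 ++ w2) = m (eval_word K w1) (eval_word K w2).
Proof.
  induction w1 as [|[b x] w1 IH]; simpl; [rewrite mul1g; reflexivity|rewrite IH, mulA; reflexivity].
Qed.

Definition word_inv (w : list (bool * K)) : list (bool * K) :=
  rev (map (fun p => (negb (fst p), snd p)) w).

Lemma eval_word_inv w : eval_word K (word_inv w) = i (eval_word K w).
Proof.
  induction w as [|[b x] w IH]; simpl; [rewrite invg1; reflexivity|].
  unfold word_inv in *. simpl. rewrite eval_word_app, IH, invgM. simpl. rewrite mulg1.
  destruct b; simpl; [rewrite invgK|]; reflexivity.
Qed.

Lemma length_word_inv w : length (word_inv w) = length w.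
Proof. unfold word_inv. rewrite length_rev, length_map. reflexivity. Qed.

Lemma word_over_inv S w : word_over K S w -> word_over K S (word_inv w).
Proof.
  intros Ow p Hp. apply in_rev, in_map_iff in Hp. destruct Hp as [q [<- Hq]]. exact (Ow q Hq).
Qed.

Variable SK : list K.
Hypothesis hSK : generates K SK (fun _ => True).

Lemma reachable_of_generates x : reachable K SK x.
Proof. apply (proj2 hSK). exact I. Qed.

Lemma shortest_word x :
  exists w, word_over K SK w /\ length w = word_length K SK x /\ eval_word K w = x.
Proof. exact (proj1 (word_length_spec (reachable_of_generates x))). Qed.

Lemma word_length_mulg x y :
  word_length K SK (m x y) <= word_length K SK x + word_length K SK y.
Proof.
  destruct (shortest_word x) as [w1 [O1 [L1 E1]]].
  destruct (shortest_word y) as [w2 [O2 [L2 E2]]].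
  assert (H := word_length_le (word_over_app O1 O2)).
  rewrite eval_word_app, E1, E2, length_app in H. lia.
Qed.

Lemma word_length_invg x : word_length K SK (i x) = word_length K SK x.
Proof.
  assert (Hle : forall y, word_length K SK (i y) <= word_length K SK y).
  { intros y. destruct (shortest_word y) as [w [Ow [Lw Ew]]].
    assert (H := word_length_le (word_over_inv Ow)).
    rewrite eval_word_inv, length_word_inv, Ew in H. lia. }
  assert (H1 := Hle x). assert (H2 := Hle (i x)). rewrite invgK in H2. lia.
Qed.

End GroupFacts.
Arguments mulg_cancel_l {K}. Arguments mulg_cancel_r {K}. Arguments invgK {K}.
Arguments invg1 {K}. Arguments invgM {K}. Arguments mulKVg {K}. Arguments mulgKV {K}.
Arguments eval_word_app {K}. Arguments word_inv {K}.
Arguments reachable_of_generates {K SK}. Arguments shortest_word {K SK}.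
Arguments word_length_mulg {K SK}. Arguments word_length_invg {K SK}.

Fixpoint sumZ (A : Type) (f : A -> Z) (l : list A) : Z :=
  match l with [] => 0%Z | a :: l' => (f a + sumZ f l')%Z end.

Lemma sumZ_app (A : Type) (f : A -> Z) l1 l2 : sumZ f (l1 ++ l2) = (sumZ f l1 + sumZ f l2)%Z.
Proof. induction l1; simpl; lia. Qed.

Lemma sumZ_map (A B : Type) (f : B -> Z) (g : A -> B) l :
  sumZ f (map g l) = sumZ (fun a => f (g a)) l.
Proof. induction l as [|a l IH]; simpl; [reflexivity|rewrite IH; reflexivity]. Qed.

Lemma sumZ_add (A : Type) (f g : A -> Z) l :
  sumZ (fun a => f a + g a)%Z l = (sumZ f l + sumZ g l)%Z.
Proof. induction l; simpl; lia. Qed.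

Lemma sumZ_ext_in (A : Type) (f g : A -> Z) l :
  (forall a, In a l -> f a = g a) -> sumZ f l = sumZ g l.
Proof. induction l as [|a l IH]; simpl; intros H; auto. rewrite H, IH; auto. Qed.

Lemma sumZ_zero (A : Type) (l : list A) : sumZ (fun _ => 0%Z) l = 0%Z.
Proof. induction l as [|a l IH]; [reflexivity|]. cbn [sumZ]. rewrite IH. reflexivity. Qed.

Lemma sumZ_le (A : Type) (f g : A -> Z) l :
  (forall a, In a l -> (f a <= g a)%Z) -> (sumZ f l <= sumZ g l)%Z.
Proof.
  induction l as [|a l IH]; simpl; intros H; [lia|].
  assert (H1 := H a (or_introl eq_refl)). assert (sumZ f l <= sumZ g l)%Z by auto. lia.
Qed.

Lemma sumZ_nonneg (A : Type) (f : A -> Z) l :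
  (forall a, In a l -> (0 <= f a)%Z) -> (0 <= sumZ f l)%Z.
Proof.
  induction l as [|a l IH]; simpl; intros H; [lia|].
  assert (0 <= f a)%Z by auto. assert (0 <= sumZ f l)%Z by auto. lia.
Qed.

Lemma sumZ_ge_elem (A : Type) (f : A -> Z) l a :
  (forall x, In x l -> (0 <= f x)%Z) -> In a l -> (f a <= sumZ f l)%Z.
Proof.
  induction l as [|b l IH]; simpl; intros H Ha; [contradiction|].
  assert (0 <= sumZ f l)%Z by (apply sumZ_nonneg; auto).
  destruct Ha as [->|Ha]; [lia|]. assert (0 <= f b)%Z by auto. specialize (IH ltac:(auto) Ha). lia.
Qed.

Lemma sumZ_const1 (A : Type) (l : list A) : sumZ (fun _ => 1%Z) l = Z.of_nat (length l).
Proof. induction l as [|a l IH]; [reflexivity|]. cbn [sumZ length]. rewrite IH, Nat2Z.inj_succ. lia. Qed.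

Lemma NoDup_map_inj (A B : Type) (f : A -> B) l :
  (forall x y, f x = f y -> x = y) -> NoDup l -> NoDup (map f l).
Proof.
  intros Hf Hl. induction Hl as [|a l Ha Hl IH]; simpl; constructor; auto.
  intros Hin. apply in_map_iff in Hin as [b [E Hb]]. apply Hf in E. subst. contradiction.
Qed.

Section WreathProduct.
Variable K : Grp.
Notation m := (gmul K).
Notation i := (ginv K).
Notation e := (gone K).
Notation G := (wreath K).

Definition lamp (g : G) : K -> Z := proj1_sig (fst g).

Lemma wreath_ext (x y : G) : (forall v, lamp x v = lamp y v) -> snd x = snd y -> x = y.
Proof.
  destruct x as [[f pf] k], y as [[f' pf'] k']. unfold lamp; simpl. intros Hf Hk.
  assert (f = f') by (apply functional_extensionality; exact Hf). subst f' k'.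
  rewrite (proof_irrelevance _ pf pf'). reflexivity.
Qed.

Lemma lamp_mul (x y : G) v : lamp (gmul G x y) v = (lamp x v + lamp y (m v (i (snd x))))%Z.
Proof. reflexivity. Qed.
Lemma snd_mul (x y : G) : snd (gmul G x y) = m (snd x) (snd y).
Proof. reflexivity. Qed.
Lemma lamp_inv (x : G) v : lamp (ginv G x) v = (- lamp x (m v (snd x)))%Z.
Proof. unfold lamp; simpl. unfold act. rewrite invgK. reflexivity. Qed.
Lemma lamp_embK k v : lamp (embK K k) v = 0%Z.
Proof. reflexivity. Qed.
Lemma snd_inv (x : G) : snd (ginv G x) = i (snd x).
Proof. reflexivity. Qed.

Lemma delta_e_spec v : (v = e /\ delta_e K v = 1%Z) \/ (v <> e /\ delta_e K v = 0%Z).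
Proof. unfold delta_e. destruct (excluded_middle_informative (v = e)); auto. Qed.

Lemma sumZ_delta_e P : NoDup P -> (0 <= sumZ (delta_e K) P <= 1)%Z.
Proof.
  induction 1 as [|p P Hp HP IH]; simpl; [lia|].
  destruct (delta_e_spec p) as [[-> ->]|[_ ->]]; [|lia].
  rewrite (sumZ_ext_in _ (fun _ => 0%Z)); [rewrite sumZ_zero; lia|].
  intros q Hq. destruct (delta_e_spec q) as [[-> _]|[_ ->]]; [contradiction|reflexivity].
Qed.

Definition letter {G0 : GOps} (p : bool * G0) : G0 := if fst p then ginv G0 (snd p) else snd p.

Lemma eval_word_cons (G0 : GOps) p w : eval_word G0 (p :: w) = gmul G0 (letter p) (eval_word G0 w).
Proof. destruct p; reflexivity. Qed.

(* [act] is a right action, so the multiplication of [wreath K] is associative only for abelian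
   [K]; the shift of the lamps of a suffix is the product of the cursor moves in reverse order. *)
Fixpoint rev_cursor (w : list (bool * G)) : K :=
  match w with [] => e | p :: w' => m (rev_cursor w') (snd (letter p)) end.

Lemma lamp_eval_app w1 w2 v :
  lamp (eval_word G (w1 ++ w2)) v =
  (lamp (eval_word G w1) v + lamp (eval_word G w2) (m v (i (rev_cursor w1))))%Z.
Proof.
  revert v. induction w1 as [|p w1 IH]; intros v.
  - simpl. rewrite invg1, mulg1. reflexivity.
  - rewrite <- app_comm_cons, !eval_word_cons, !lamp_mul, IH. cbn [rev_cursor]. rewrite invgM, mulA. lia.
Qed.

Lemma snd_eval_app w1 w2 :
  snd (eval_word G (w1 ++ w2)) = m (snd (eval_word G w1)) (snd (eval_word G w2)).
Proof.
  induction w1 as [|p w1 IH]; [simpl; rewrite mul1g; reflexivity|].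
  rewrite <- app_comm_cons, !eval_word_cons, !snd_mul, IH, mulA. reflexivity.
Qed.

Variable SK : list K.
Hypothesis hSK : generates K SK (fun _ => True).
Notation S := (wr_gens K SK).

Lemma letter_genZ b :
  snd (letter (b, wr_genZ K)) = e /\
  forall v, lamp (letter (b, wr_genZ K)) v = (if b then - delta_e K v else delta_e K v)%Z.
Proof.
  destruct b; cbn [letter fst snd]; [|split; reflexivity].
  split; [apply invg1|]. intros v. rewrite lamp_inv. simpl. rewrite mulg1. reflexivity.
Qed.

Lemma letter_cases p : In (snd p) S ->
  (snd (letter p) = e /\
   forall v, lamp (letter p) v = (if fst p then - delta_e K v else delta_e K v)%Z) \/
  (exists s, In s SK /\ lamp (letter p) = (fun _ => 0%Z) /\
             snd (letter p) = (if fst p then i s else s)).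
Proof.
  destruct p as [b y]. simpl. intros [<-|Hy]; [left; apply letter_genZ|].
  right. apply in_map_iff in Hy as [s [<- Hs]]. exists s. split; [exact Hs|].
  destruct b; split; reflexivity.
Qed.

(* Each letter changes one lamp by one or shifts all lamps, so a word of length n
   has total lamp mass at most n. *)
Lemma sum_abs_lamp_le_length w : word_over G S w -> forall P, NoDup P ->
  (sumZ (fun v => Z.abs (lamp (eval_word G w) v)) P <= Z.of_nat (length w))%Z.
Proof.
  induction w as [|p w IH]; intros Ow P HP.
  - apply Z.le_trans with (sumZ (fun _ => 0%Z) P); [apply sumZ_le; intros; simpl; lia|].
    rewrite sumZ_zero. simpl. lia.
  - destruct (word_over_cons_inv Ow) as [Hp Ow']. cbn [length]. rewrite eval_word_cons, Nat2Z.inj_succ.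
    destruct (letter_cases p Hp) as [[Ep Lp]|[s [Hs [Lp Ep]]]].
    + eapply Z.le_trans.
      { apply sumZ_le with (g := fun v => (delta_e K v + Z.abs (lamp (eval_word G w) v))%Z).
        intros v _. rewrite lamp_mul, Lp, Ep, invg1, mulg1.
        destruct (delta_e_spec v) as [[_ ->]|[_ ->]]; destruct (fst p); lia. }
      rewrite sumZ_add. assert (H1 := sumZ_delta_e HP). assert (H2 := IH Ow' P HP). lia.
    + assert (HP' : NoDup (map (fun v => m v (i (snd (letter p)))) P)).
      { apply NoDup_map_inj; [intros x y; apply mulg_cancel_r|exact HP]. }
      assert (H := IH Ow' _ HP'). rewrite sumZ_map in H.
      eapply Z.le_trans; [|apply Z.le_le_succ_r; exact H].
      apply sumZ_le. intros v _. rewrite lamp_mul, Lp. lia.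
Qed.

Definition cursor_word (w : list (bool * G)) : list (bool * K) :=
  flat_map (fun p => if excluded_middle_informative (snd (snd p) = e) then []
                     else [(fst p, snd (snd p))]) w.

Lemma cursor_word_spec w : word_over G S w ->
  word_over K SK (cursor_word w) /\ length (cursor_word w) <= length w /\
  eval_word K (cursor_word w) = snd (eval_word G w).
Proof.
  induction w as [|[b y] w IH]; intros Ow; [split; [intros q []|auto]|].
  destruct (word_over_cons_inv Ow) as [Hy Ow']. destruct (IH Ow') as [O [L E]].
  unfold cursor_word; cbn [flat_map fst snd]; fold (cursor_word w).
  rewrite eval_word_cons, snd_mul.
  destruct (excluded_middle_informative (snd y = e)) as [Ey|Ey]; simpl app.
  - split; [exact O|split; [apply Nat.le_le_succ_r; exact L|]].
    rewrite E. destruct b; cbn [letter fst snd]; rewrite ?snd_inv, Ey, ?invg1, mul1g; reflexivity.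
  - simpl in Hy. destruct Hy as [<-|Hy]; [contradiction|].
    apply in_map_iff in Hy as [s [<- Hs]]. split; [|split; [apply le_n_S; exact L|]].
    + intros q [<-|Hq]; [exact Hs|exact (O q Hq)].
    + rewrite eval_word_cons, E. destruct b; reflexivity.
Qed.

Lemma word_length_snd_eval_le w : word_over G S w ->
  word_length K SK (snd (eval_word G w)) <= length w.
Proof.
  intros Ow. destruct (cursor_word_spec Ow) as [O [L <-]].
  eapply Nat.le_trans; [apply word_length_le; exact O|exact L].
Qed.

Definition lift_word (a : list (bool * K)) : list (bool * G) := map (fun p => (fst p, embK K (snd p))) a.

Lemma word_over_lift (T : list K) a : word_over K T a -> word_over G (map (embK K) T) (lift_word a).
Proof.
  intros Oa p Hp. apply in_map_iff in Hp as [q [<- Hq]]. simpl. apply in_map, (Oa q Hq).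
Qed.

Lemma word_over_gens_lift a : word_over K SK a -> word_over G S (lift_word a).
Proof. intros Oa p Hp. right. exact (word_over_lift Oa p Hp). Qed.

Lemma length_lift_word a : length (lift_word a) = length a.
Proof. apply length_map. Qed.

Lemma eval_lift_word a : eval_word G (lift_word a) = embK K (eval_word K a).
Proof.
  induction a as [|[b s] a IH]; [reflexivity|].
  cbn [lift_word map fst snd]. fold (lift_word a). rewrite eval_word_cons, IH.
  apply wreath_ext; [intros v|]; destruct b; reflexivity.
Qed.

Lemma rev_cursor_lift_word a : rev_cursor (lift_word a) = eval_word K (rev a).
Proof.
  induction a as [|[b s] a IH]; [reflexivity|].
  cbn [lift_word map rev_cursor]; fold (lift_word a). rewrite IH. cbn [rev].
  rewrite eval_word_app. simpl. rewrite mulg1. destruct b; reflexivity.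
Qed.

Definition lamp_word (c : Z) : list (bool * G) := repeat ((c <? 0)%Z, wr_genZ K) (Z.abs_nat c).

Lemma lamp_word_spec c :
  word_over G S (lamp_word c) /\ rev_cursor (lamp_word c) = e /\
  forall v, lamp (eval_word G (lamp_word c)) v = (c * delta_e K v)%Z.
Proof.
  unfold lamp_word. split; [intros p Hp; apply repeat_spec in Hp; subst p; left; reflexivity|].
  assert (H : forall n, rev_cursor (repeat ((c <? 0)%Z, wr_genZ K) n) = e /\
            forall v, lamp (eval_word G (repeat ((c <? 0)%Z, wr_genZ K) n)) v =
                      ((if (c <? 0)%Z then - Z.of_nat n else Z.of_nat n) * delta_e K v)%Z).
  { destruct (letter_genZ (c <? 0)%Z) as [Es Ls].
    induction n as [|n [IHc IHl]]; [split; [reflexivity|intros v; destruct (c <? 0)%Z; reflexivity]|].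
    cbn [repeat rev_cursor]. rewrite IHc, Es, mulg1. split; [reflexivity|intros v].
    rewrite eval_word_cons, lamp_mul, Ls, IHl, Es, invg1, mulg1.
    destruct (c <? 0)%Z; lia. }
  destruct (H (Z.abs_nat c)) as [Hc Hl]. split; [exact Hc|].
  intros v. rewrite Hl. destruct (Z.ltb_spec c 0); f_equal; lia.
Qed.

(* Conjugating [lamp_word c] by a word for [u] moves the [c] lamps from [e] to [u]. *)
Lemma add_lamp_at w u c : word_over G S w -> exists w', word_over G S w' /\
  forall v, lamp (eval_word G w') v = (lamp (eval_word G w) v + c * delta_e K (m v (i u)))%Z.
Proof.
  intros Ow. destruct (shortest_word hSK u) as [a [Oa [_ Ea]]].
  destruct (shortest_word hSK (i u)) as [b [Ob [_ Eb]]].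
  destruct (lamp_word_spec c) as [Oc [Rc Lc]].
  exists (lift_word (rev a) ++ (lamp_word c ++ (lift_word (rev b) ++ w))). split.
  - repeat apply word_over_app; auto using word_over_gens_lift, word_over_rev.
  - intros v. rewrite !lamp_eval_app, !eval_lift_word, Lc, !rev_cursor_lift_word, Rc, !rev_involutive, Ea, Eb.
    rewrite !lamp_embK, invg1, mulg1, invgK, mulgKV. lia.
Qed.

Lemma exists_word_with_lamps (P : list K) (F : K -> Z) :
  (forall v, F v <> 0%Z -> In v P) ->
  exists w, word_over G S w /\ forall v, lamp (eval_word G w) v = F v.
Proof.
  revert F. induction P as [|p P IH]; intros F HF.
  - exists []. split; [intros q []|]. intros v. apply NNPP. intros Hv. exact (HF v (not_eq_sym Hv)).
  - set (F' := fun v => if excluded_middle_informative (v = p) then 0%Z else F v).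
    destruct (IH F') as [w0 [O0 L0]].
    { intros v Hv. unfold F' in Hv. destruct (excluded_middle_informative (v = p)); [lia|].
      destruct (HF v Hv); [congruence|assumption]. }
    destruct (add_lamp_at p (F p) O0) as [w [Ow Lw]].
    exists w. split; [exact Ow|]. intros v. rewrite Lw, L0. unfold F'.
    destruct (excluded_middle_informative (v = p)) as [->|Nv].
    + rewrite mulgV. destruct (delta_e_spec e) as [[_ ->]|[? _]]; [lia|congruence].
    + destruct (delta_e_spec (m v (i p))) as [[Dv _]|[_ ->]]; [|lia].
      exfalso. apply Nv. apply (mulg_cancel_r (i p)). rewrite Dv, mulgV. reflexivity.
Qed.

(* Append to [w] a word of K correcting the cursor. *)
Lemma complete_word (x : G) w : word_over G S w ->
  (forall v, lamp x v = lamp (eval_word G w) v) ->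
  exists w', word_over G S w' /\ eval_word G w' = x /\
             length w' <= 2 * length w + word_length K SK (snd x).
Proof.
  intros Ow Lw. set (k := snd (eval_word G w)).
  destruct (shortest_word hSK (m (i k) (snd x))) as [a [Oa [La Ea]]].
  exists (w ++ lift_word a). split; [apply word_over_app; auto using word_over_gens_lift|split].
  - apply wreath_ext.
    + intros v. rewrite lamp_eval_app, eval_lift_word, Lw, lamp_embK. lia.
    + rewrite snd_eval_app, eval_lift_word, Ea. apply mulKVg.
  - rewrite length_app, length_lift_word, La.
    assert (H1 := word_length_mulg hSK (i k) (snd x)). rewrite word_length_invg in H1 by exact hSK.
    assert (H2 := word_length_snd_eval_le Ow). fold k in H2. lia.
Qed.

Lemma reachable_wreath (x : G) : reachable G S x.
Proof.
  destruct (proj2_sig (fst x)) as [P HP].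
  destruct (exists_word_with_lamps P (lamp x) HP) as [w [Ow Lw]].
  destruct (complete_word x Ow (fun v => eq_sym (Lw v))) as [w' [Ow' [Ew' _]]].
  exists w'. auto.
Qed.

Lemma word_length_wreath_le (x : G) w : word_over G S w ->
  (forall v, lamp x v = lamp (eval_word G w) v) ->
  word_length G S x <= 2 * length w + word_length K SK (snd x).
Proof.
  intros Ow Lw. destruct (complete_word x Ow Lw) as [w' [Ow' [<- Lw']]].
  eapply Nat.le_trans; [apply word_length_le; exact Ow'|exact Lw'].
Qed.

Lemma shortest_word_wreath (x : G) :
  exists w, word_over G S w /\ length w = word_length G S x /\ eval_word G w = x.
Proof. exact (proj1 (word_length_spec (reachable_wreath x))). Qed.

Lemma sum_abs_lamp_le_word_length (x : G) P : NoDup P ->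
  (sumZ (fun v => Z.abs (lamp x v)) P <= Z.of_nat (word_length G S x))%Z.
Proof.
  intros HP. destruct (shortest_word_wreath x) as [w [Ow [<- <-]]].
  exact (sum_abs_lamp_le_length Ow HP).
Qed.

Lemma abs_lamp_le_word_length (x : G) v : (Z.abs (lamp x v) <= Z.of_nat (word_length G S x))%Z.
Proof.
  assert (H := sum_abs_lamp_le_word_length x (NoDup_cons v (@in_nil _ v) (NoDup_nil _))).
  simpl in H. lia.
Qed.

Lemma word_length_snd_le (x : G) : word_length K SK (snd x) <= word_length G S x.
Proof.
  destruct (shortest_word_wreath x) as [w [Ow [<- <-]]]. exact (word_length_snd_eval_le Ow).
Qed.

Lemma word_length_embK k : word_length G S (embK K k) = word_length K SK k.
Proof.
  apply Nat.le_antisymm; [|exact (word_length_snd_le (embK K k))].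
  destruct (shortest_word hSK k) as [a [Oa [<- <-]]].
  rewrite <- eval_lift_word, <- length_lift_word. apply word_length_le, word_over_gens_lift, Oa.
Qed.

End WreathProduct.
Arguments lift_word {K}. Arguments length_lift_word {K}. Arguments eval_lift_word {K}.
Arguments exists_word_with_lamps {K SK}. Arguments word_length_embK {K SK}.

Section SubgroupsOfK.
Variable K : Grp.
Variable SK : list K.
Hypothesis hSK : generates K SK (fun _ => True).
Notation G := (wreath K).
Notation S := (wr_gens K SK).

Definition base_word (w : list (bool * G)) : list (bool * K) := map (fun p => (fst p, snd (snd p))) w.

Lemma base_word_spec (T : list K) w : word_over G (map (embK K) T) w ->
  word_over K T (base_word w) /\ length (base_word w) = length w /\
  eval_word K (base_word w) = snd (eval_word G w).
Proof.
  induction w as [|[b y] w IH]; intros Ow; [split; [intros p []|split; reflexivity]|].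
  destruct (word_over_cons_inv Ow) as [Hy Ow']. destruct (IH Ow') as [O [L E]].
  simpl in Hy. apply in_map_iff in Hy as [t [<- Ht]]. split; [|split].
  - intros p [<-|Hp]; [exact Ht|exact (O p Hp)].
  - simpl. rewrite L. reflexivity.
  - cbn [base_word map fst snd]. fold (base_word w).
    rewrite !eval_word_cons, snd_mul, E. destruct b; reflexivity.
Qed.

Lemma word_length_embK_gens (T : list K) k : reachable K T k ->
  word_length G (map (embK K) T) (embK K k) = word_length K T k.
Proof.
  intros Hk. destruct (word_length_spec Hk) as [[a [Oa [La Ea]]] _].
  apply Nat.le_antisymm.
  - rewrite <- La, <- Ea, <- eval_lift_word, <- (length_lift_word a).
    apply word_length_le, word_over_lift, Oa.
  - assert (Hk' : reachable G (map (embK K) T) (embK K k)).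
    { exists (lift_word a). split; [apply word_over_lift, Oa|rewrite eval_lift_word, Ea; reflexivity]. }
    destruct (word_length_spec Hk') as [[w [Ow [<- Ew]]] _].
    destruct (base_word_spec T Ow) as [O [<- E]]. rewrite Ew in E. simpl in E. rewrite <- E.
    apply word_length_le, O.
Qed.

Lemma dist_embK (H : K -> Prop) (T : list K) : generates K T H -> forall n,
  dist G S (fun g => exists k, H k /\ g = embK K k) (map (embK K) T) n = dist K SK H T n.
Proof.
  intros [_ HT] n. unfold dist. f_equal. apply functional_extensionality. intros d.
  assert (HTk : forall k, H k -> word_length G (map (embK K) T) (embK K k) = word_length K T k).
  { intros k Hk. apply word_length_embK_gens, HT, Hk. }
  apply propositional_extensionality. split.
  - intros [[g [[k [Hk ->]] [L E]]] U]. rewrite word_length_embK in L by exact hSK.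
    split; [exists k; rewrite <- HTk; auto|].
    intros k' Hk' L'. rewrite <- HTk by exact Hk'. apply U; [eauto|].
    rewrite word_length_embK by exact hSK. exact L'.
  - intros [[k [Hk [L E]]] U]. split.
    + exists (embK K k). rewrite word_length_embK, HTk by assumption. eauto.
    + intros g [k' [Hk' ->]] L'. rewrite word_length_embK in L' by exact hSK.
      rewrite HTk by exact Hk'. auto.
Qed.

Lemma dist_subgroup_K (H : K -> Prop) (T : list K) : is_subgroup K H -> generates K T H ->
  simeq (dist G S (fun g => exists k, H k /\ g = embK K k) (map (embK K) T)) (dist K SK H T).
Proof.
  intros HH HT. rewrite (functional_extensionality _ _ (dist_embK HT)).
  assert (Hmono : preceq (dist K SK H T) (dist K SK H T)).
  { apply preceq_refl_monotone, (@dist_monotone K SK H T (gone K)).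
    - intros g _. apply (reachable_of_generates hSK).
    - apply HH.
    - apply word_length_one. }
  split; exact Hmono.
Qed.

Lemma dist_K_undistorted : simeq (dist G S (@inK K) (map (embK K) SK)) (fun n => n).
Proof.
  assert (E : @inK K = fun g => exists k, (fun _ => True) k /\ g = embK K k).
  { apply functional_extensionality. intros g. apply propositional_extensionality.
    split; intros [k Hk]; exists k; [split; auto|apply Hk]. }
  rewrite E. split; [|apply preceq_id].
  exists 1. split; [lia|]. intros n. rewrite dist_embK by exact hSK.
  destruct (@dist_spec K SK (fun _ => True) SK n (gone K)) as [[g [_ [L <-]]] _].
  - intros g _. apply (reachable_of_generates hSK).
  - exact I.
  - rewrite word_length_one. lia.
  - lia.
Qed.

End SubgroupsOfK.
Arguments dist_subgroup_K {K SK} hSK {H T}. Arguments dist_K_undistorted {K SK}.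

Section IntegerCombinations.
Variable X : Type.

Definition comb := list (Z * (X -> Z)).
Definition comb_value (c : comb) (v : X) : Z := sumZ (fun p => (fst p * snd p v)%Z) c.
Definition comb_cost (c : comb) : Z := sumZ (fun p => Z.abs (fst p)) c.
Definition comb_over (T : list (X -> Z)) (c : comb) : Prop := forall p, In p c -> In (snd p) T.
Definition comb_scale (q : Z) (c : comb) : comb := map (fun p => (q * fst p, snd p)%Z) c.
Definition l1_norm (l : list X) (h : X -> Z) : Z := sumZ (fun v => Z.abs (h v)) l.

Lemma comb_value_app c1 c2 v : comb_value (c1 ++ c2) v = (comb_value c1 v + comb_value c2 v)%Z.
Proof. apply sumZ_app. Qed.
Lemma comb_cost_app c1 c2 : comb_cost (c1 ++ c2) = (comb_cost c1 + comb_cost c2)%Z.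
Proof. apply sumZ_app. Qed.
Lemma comb_value_scale q c v : comb_value (comb_scale q c) v = (q * comb_value c v)%Z.
Proof. unfold comb_value, comb_scale. induction c as [|p c IH]; simpl; [lia|rewrite IH; lia]. Qed.
Lemma comb_cost_scale q c : comb_cost (comb_scale q c) = (Z.abs q * comb_cost c)%Z.
Proof. unfold comb_cost, comb_scale. induction c as [|p c IH]; simpl; [lia|rewrite IH, Z.abs_mul; lia]. Qed.
Lemma comb_cost_nonneg c : (0 <= comb_cost c)%Z.
Proof. apply sumZ_nonneg. intros; lia. Qed.
Lemma comb_over_app T c1 c2 : comb_over T c1 -> comb_over T c2 -> comb_over T (c1 ++ c2).
Proof. intros H1 H2 p Hp. apply in_app_or in Hp as [Hp|Hp]; auto. Qed.
Lemma comb_over_scale T q c : comb_over T c -> comb_over T (comb_scale q c).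
Proof. intros Hc p Hp. apply in_map_iff in Hp as [r [<- Hr]]. exact (Hc r Hr). Qed.
Lemma l1_norm_nonneg l h : (0 <= l1_norm l h)%Z.
Proof. apply sumZ_nonneg. intros; lia. Qed.
Lemma l1_norm_sub_le l h s q :
  (l1_norm l (fun v => h v - q * s v) <= l1_norm l h + Z.abs q * l1_norm l s)%Z.
Proof.
  unfold l1_norm. induction l as [|a l IH]; simpl; [lia|].
  assert (H := Z.abs_triangle (h a) (- (q * s a))). rewrite Z.abs_opp, Z.abs_mul in H. nia.
Qed.

Lemma comb_value_nonzero T c v : comb_over T c -> comb_value c v <> 0%Z ->
  exists t, In t T /\ t v <> 0%Z.
Proof.
  unfold comb_value. intros Hc Hv. induction c as [|p c IH]; simpl in Hv; [lia|].
  destruct (Z.eq_dec (snd p v) 0) as [E|E].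
  - apply IH; [intros q Hq; apply Hc; right; exact Hq|]. rewrite E in Hv. lia.
  - exists (snd p). split; [apply Hc; left; reflexivity|exact E].
Qed.

Lemma comb_reexpress (T T' : list (X -> Z)) D : (0 <= D)%Z ->
  (forall t', In t' T' -> exists c, comb_over T c /\ (forall v, comb_value c v = t' v) /\
                                    (comb_cost c <= D)%Z) ->
  forall c', comb_over T' c' -> exists c, comb_over T c /\
    (forall v, comb_value c v = comb_value c' v) /\ (comb_cost c <= D * comb_cost c')%Z.
Proof.
  intros HD HT c'. induction c' as [|[d t'] c' IH]; intros Hc.
  - exists []. split; [intros p []|split; [reflexivity|unfold comb_cost; simpl; lia]].
  - destruct (HT t' (Hc (d, t') (or_introl eq_refl))) as [c1 [O1 [V1 C1]]].
    destruct IH as [c2 [O2 [V2 C2]]]; [intros p Hp; apply Hc; right; exact Hp|].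
    exists (comb_scale d c1 ++ c2). split; [apply comb_over_app; auto using comb_over_scale|split].
    + intros v. rewrite comb_value_app, comb_value_scale, V1, V2. unfold comb_value; simpl. lia.
    + rewrite comb_cost_app, comb_cost_scale. unfold comb_cost at 3; cbn [sumZ fst].
      fold (comb_cost c'). assert (Z.abs d * comb_cost c1 <= Z.abs d * D)%Z by nia. lia.
Qed.

Lemma gcd_comb (T : list (X -> Z)) (u : X) :
  exists b, comb_over T b /\ forall t, In t T -> (comb_value b u | t u)%Z.
Proof.
  induction T as [|t T [b [Ob Db]]]; [exists []; split; [intros p []|intros t []]|].
  destruct (Zis_gcd_bezout _ _ _ (Zgcd_is_gcd (t u) (comb_value b u))) as [x y E].
  exists ((x, t) :: comb_scale y b). split.
  - intros p [<-|Hp]; [left; reflexivity|right; exact (comb_over_scale y Ob p Hp)].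
  - assert (Eg : comb_value ((x, t) :: comb_scale y b) u = Z.gcd (t u) (comb_value b u)).
    { unfold comb_value at 1; cbn [sumZ fst snd]. fold (comb_value (comb_scale y b) u).
      rewrite comb_value_scale. lia. }
    rewrite Eg. intros t' [<-|Ht']; [apply Z.gcd_divide_l|].
    eapply Z.divide_trans; [apply Z.gcd_divide_r|exact (Db t' Ht')].
Qed.

Definition supported_in (T : list (X -> Z)) (l : list X) : Prop :=
  forall t, In t T -> forall v, t v <> 0%Z -> In v l.

Definition comb_cost_bounded (T : list (X -> Z)) (l : list X) (C : Z) : Prop :=
  forall c, comb_over T c -> exists c', comb_over T c' /\
    (forall v, comb_value c' v = comb_value c v) /\ (comb_cost c' <= C * l1_norm l (comb_value c))%Z.

(* [b] takes at [u] the gcd of the values [t u], so subtracting multiples of [b] clears the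
   coordinate [u] with exact quotients. *)
Section ClearCoordinate.
Variables (T : list (X -> Z)) (u : X) (b : comb).
Hypothesis Ob : comb_over T b.
Hypothesis Db : forall t, In t T -> (comb_value b u | t u)%Z.

Definition clear_coord (t : X -> Z) : X -> Z := fun v => (t v - (t u / comb_value b u) * comb_value b v)%Z.

Lemma div_exact x y : (y | x)%Z -> (x / y * y = x)%Z.
Proof. intros [k ->]. destruct (Z.eq_dec y 0) as [->|N]; [simpl; lia|rewrite Z.div_mul; auto]. Qed.

Lemma clear_coord_supported l : supported_in T (u :: l) -> supported_in (map clear_coord T) l.
Proof.
  intros HT t' Ht' v Hv. apply in_map_iff in Ht' as [t [<- Ht]]. unfold clear_coord in Hv.
  destruct (classic (v = u)) as [->|Nv].
  - exfalso. apply Hv. rewrite (div_exact (Db t Ht)). lia.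
  - assert (t v <> 0 \/ comb_value b v <> 0)%Z as [H|H] by lia.
    + destruct (HT t Ht v H) as [E|E]; [congruence|exact E].
    + destruct (comb_value_nonzero v Ob H) as [t0 [Ht0 H0]].
      destruct (HT t0 Ht0 v H0) as [E|E]; [congruence|exact E].
Qed.

Lemma clear_coord_reexpressible : exists D, (0 <= D)%Z /\
  forall t', In t' (map clear_coord T) -> exists c, comb_over T c /\
    (forall v, comb_value c v = t' v) /\ (comb_cost c <= D)%Z.
Proof.
  set (M := sumZ (fun t : X -> Z => Z.abs (t u / comb_value b u)) T).
  assert (HM : (0 <= M)%Z) by (apply sumZ_nonneg; intros; lia).
  assert (HB : (0 <= comb_cost b)%Z) by apply comb_cost_nonneg.
  exists (1 + M * comb_cost b)%Z. split; [nia|]. intros t' Ht'.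
  apply in_map_iff in Ht' as [t [<- Ht]].
  exists ((1%Z, t) :: comb_scale (- (t u / comb_value b u)) b). split; [|split].
  - intros p [<-|Hp]; [exact Ht|exact (comb_over_scale _ Ob p Hp)].
  - intros v. unfold comb_value at 1. cbn [sumZ fst snd].
    fold (comb_value (comb_scale (- (t u / comb_value b u)) b) v). rewrite comb_value_scale.
    unfold clear_coord. lia.
  - unfold comb_cost at 1. cbn [sumZ fst]. fold (comb_cost (comb_scale (- (t u / comb_value b u)) b)).
    rewrite comb_cost_scale, Z.abs_opp.
    assert (Z.abs (t u / comb_value b u) <= M)%Z
      by (apply sumZ_ge_elem with (f := fun t : X -> Z => Z.abs (t u / comb_value b u)); auto; intros; lia).
    nia.
Qed.

Lemma clear_coord_comb c : comb_over T c ->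
  let Q := sumZ (fun p : Z * (X -> Z) => (fst p * (snd p u / comb_value b u))%Z) c in
  (Z.abs Q <= Z.abs (comb_value c u))%Z /\
  comb_over (map clear_coord T) (map (fun p => (fst p, clear_coord (snd p))) c) /\
  forall v, comb_value (map (fun p => (fst p, clear_coord (snd p))) c) v =
            (comb_value c v - Q * comb_value b v)%Z.
Proof.
  intros Hc Q. split; [|split].
  - assert (HQ : (Q * comb_value b u = comb_value c u)%Z).
    { unfold Q, comb_value. clear -Hc Db. induction c as [|p c IH]; simpl; [lia|].
      rewrite Z.mul_add_distr_r, IH by (intros r Hr; apply Hc; right; exact Hr).
      rewrite <- Z.mul_assoc, div_exact by (apply Db, Hc; left; reflexivity). reflexivity. }
    destruct (Z.eq_dec (comb_value b u) 0) as [E|E].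
    + assert (Q = 0)%Z as ->; [|lia].
      unfold Q. rewrite E. clear. induction c as [|p c IH]; simpl; [reflexivity|].
      rewrite Zdiv_0_r, IH. lia.
    + rewrite <- HQ, Z.abs_mul. nia.
  - intros p Hp. apply in_map_iff in Hp as [r [<- Hr]]. simpl. apply in_map, Hc, Hr.
  - intros v. unfold comb_value, Q. clear. induction c as [|p c IH]; simpl; [lia|].
    rewrite IH. unfold clear_coord, comb_value. ring.
Qed.

End ClearCoordinate.

Lemma comb_cost_bounded_cons (u : X) (l : list X) :
  (forall T, supported_in T l -> exists C, (0 <= C)%Z /\ comb_cost_bounded T l C) ->
  forall T, supported_in T (u :: l) -> exists C, (0 <= C)%Z /\ comb_cost_bounded T (u :: l) C.
Proof.
  intros IH T HT. destruct (gcd_comb T u) as [b [Ob Db]].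
  destruct (IH _ (clear_coord_supported Ob Db HT)) as [C' [HC' BC']].
  destruct (clear_coord_reexpressible u Ob) as [D [HD RD]].
  set (Ns := l1_norm l (comb_value b)). set (B := comb_cost b).
  assert (HNs : (0 <= Ns)%Z) by apply l1_norm_nonneg.
  assert (HB : (0 <= B)%Z) by apply comb_cost_nonneg.
  exists (D * C' * (1 + Ns) + B)%Z. split; [nia|]. intros c Hc.
  destruct (clear_coord_comb b Db Hc) as [HQ [Ock Vck]].
  set (Q := sumZ _ c) in HQ, Vck.
  destruct (BC' _ Ock) as [ck' [Ock' [Vck' Cck']]].
  destruct (comb_reexpress HD RD Ock') as [ce [Oce [Vce Cce]]].
  exists (ce ++ comb_scale Q b). split; [apply comb_over_app; auto using comb_over_scale|split].
  - intros v. rewrite comb_value_app, comb_value_scale, Vce, Vck', Vck. lia.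
  - rewrite comb_cost_app, comb_cost_scale. fold B.
    set (h := comb_value c) in *.
    assert (Hn : (l1_norm l (comb_value (map (fun p => (fst p, clear_coord u b (snd p))) c))
                  <= l1_norm l h + Z.abs Q * Ns)%Z).
    { unfold l1_norm at 1. rewrite (sumZ_ext_in _ (fun v => Z.abs (h v - Q * comb_value b v)))
        by (intros v _; rewrite Vck; reflexivity).
      apply l1_norm_sub_le. }
    change (l1_norm (u :: l) h) with (Z.abs (h u) + l1_norm l h)%Z.
    assert (HN : (0 <= l1_norm l h)%Z) by apply l1_norm_nonneg.
    assert (Cce' : (comb_cost ce <= D * (C' * (l1_norm l h + Z.abs Q * Ns)))%Z).
    { eapply Z.le_trans; [exact Cce|]. apply Z.mul_le_mono_nonneg_l; [exact HD|].
      eapply Z.le_trans; [exact Cck'|]. apply Z.mul_le_mono_nonneg_l; [exact HC'|exact Hn]. }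
    assert (0 <= Z.abs Q)%Z by lia.
    assert (Z.abs Q * Ns <= Z.abs (h u) * Ns)%Z by (apply Z.mul_le_mono_nonneg_r; auto).
    assert (Z.abs Q * B <= Z.abs (h u) * B)%Z by (apply Z.mul_le_mono_nonneg_r; auto).
    assert (0 <= D * C')%Z by nia.
    nia.
Qed.

(* Every finitely generated subgroup of Z^l is undistorted for the l1-norm. *)
Lemma comb_cost_bound (l : list X) :
  forall T, supported_in T l -> exists C, (0 <= C)%Z /\ comb_cost_bounded T l C.
Proof.
  induction l as [|u l IH]; [|exact (comb_cost_bounded_cons IH)].
  intros T HT. exists 0%Z. split; [lia|]. intros c Hc. exists []. split; [intros p []|split].
  - intros v. destruct (Z.eq_dec (comb_value c v) 0) as [E|E]; [rewrite E; reflexivity|].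
    destruct (comb_value_nonzero v Hc E) as [t [Ht Hv]]. destruct (HT t Ht v Hv).
  - unfold comb_cost. simpl. lia.
Qed.

End IntegerCombinations.

Section SubgroupsOfW.
Variable K : Grp.
Variable SK : list K.
Hypothesis hSK : generates K SK (fun _ => True).
Notation G := (wreath K).
Notation S := (wr_gens K SK).
Notation e := (gone K).

Definition comb_of_word (w : list (bool * G)) : comb K :=
  map (fun p : bool * G => (if fst p then (-1)%Z else 1%Z, lamp (snd p))) w.

Lemma eval_word_in_W w : (forall p, In p w -> inW (snd p)) ->
  (forall v, lamp (eval_word G w) v = comb_value (comb_of_word w) v) /\ snd (eval_word G w) = e.
Proof.
  induction w as [|[b y] w IH]; intros Hw; [split; reflexivity|].
  assert (Hy : snd y = e) by exact (Hw (b, y) (or_introl eq_refl)).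
  destruct IH as [IHl IHs]; [intros p Hp; apply Hw; right; exact Hp|].
  assert (Es : snd (letter (b, y)) = e) by (destruct b; cbn [letter fst snd]; rewrite ?snd_inv, Hy, ?invg1; reflexivity).
  rewrite eval_word_cons, snd_mul, Es, IHs, mulg1. split; [intros v|reflexivity].
  rewrite lamp_mul, Es, invg1, mulg1, IHl. unfold comb_value at 2. cbn [comb_of_word map sumZ fst snd].
  fold (comb_of_word w). fold (comb_value (comb_of_word w) v).
  destruct b; cbn [letter fst snd]; [rewrite lamp_inv, Hy, mulg1|]; lia.
Qed.

Lemma comb_value_repeat b t n v : comb_value (comb_of_word (repeat (b, t) n)) v =
  ((if b then - Z.of_nat n else Z.of_nat n) * lamp t v)%Z.
Proof.
  induction n as [|n IH]; [destruct b; reflexivity|].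
  cbn [repeat]. unfold comb_of_word; cbn [map]. fold (comb_of_word (repeat (b, t) n)).
  unfold comb_value at 1; cbn [sumZ fst snd]. fold (comb_value (comb_of_word (repeat (b, t) n)) v).
  rewrite IH. destruct b; lia.
Qed.

Lemma word_of_comb (T : list G) c : comb_over (map (@lamp K) T) c ->
  exists w, word_over G T w /\ Z.of_nat (length w) = comb_cost c /\
            forall v, comb_value (comb_of_word w) v = comb_value c v.
Proof.
  induction c as [|[d f] c IH]; intros Hc; [exists []; split; [intros p []|split; reflexivity]|].
  destruct IH as [w [Ow [Lw Vw]]]; [intros p Hp; apply Hc; right; exact Hp|].
  assert (Hf := Hc (d, f) (or_introl eq_refl)). simpl in Hf. apply in_map_iff in Hf as [t [<- Ht]].
  exists (repeat ((d <? 0)%Z, t) (Z.abs_nat d) ++ w). split; [|split].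
  - apply word_over_app; [|exact Ow]. intros p Hp. apply repeat_spec in Hp. subst p. exact Ht.
  - rewrite length_app, repeat_length. change (@length (bool * wr_carrier K) w) with (@length (bool * G) w).
    unfold comb_cost; cbn [sumZ fst]. fold (comb_cost c). lia.
  - intros v. unfold comb_of_word. rewrite map_app. fold (comb_of_word (repeat ((d <? 0)%Z, t) (Z.abs_nat d))).
    fold (comb_of_word w). rewrite comb_value_app, comb_value_repeat, Vw. unfold comb_value at 2. cbn [sumZ fst snd].
    fold (comb_value c v). destruct (Z.ltb_spec d 0); lia.
Qed.

Lemma common_support (T : list G) : exists l, NoDup l /\ supported_in (map (@lamp K) T) l.
Proof.
  assert (exists l, supported_in (map (@lamp K) T) l) as [l Hl].
  { induction T as [|t T [l IH]]; [exists []; intros t []|].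
    destruct (proj2_sig (fst t)) as [l0 H0]. exists (l0 ++ l).
    intros f [<-|Hf] v Hv; apply in_or_app; [left; exact (H0 v Hv)|right; exact (IH f Hf v Hv)]. }
  exists (nodup (fun x y : K => excluded_middle_informative (x = y)) l).
  split; [apply NoDup_nodup|]. intros f Hf v Hv. apply nodup_In, (Hl f Hf v Hv).
Qed.

Lemma word_length_W_le (H : G -> Prop) (T : list G) : (forall g, H g -> inW g) -> generates G T H ->
  exists C, forall h, H h -> word_length G T h <= C * word_length G S h.
Proof.
  intros HW [HT1 HT2].
  destruct (common_support T) as [l [Hl Hsupp]].
  destruct (comb_cost_bound Hsupp) as [C [HC BC]].
  exists (Z.to_nat C). intros h Hh.
  assert (Hletters : forall w, word_over G T w -> forall p, In p w -> inW (snd p))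
    by (intros w Ow p Hp; apply HW, HT1, Ow, Hp).
  destruct (proj1 (HT2 h) Hh) as [w [Ow Ew]].
  destruct (eval_word_in_W w (Hletters w Ow)) as [Lw _].
  destruct (BC (comb_of_word w)) as [c' [Oc' [Vc' Cc']]].
  { intros p Hp. apply in_map_iff in Hp as [q [<- Hq]]. simpl. apply in_map, Ow, Hq. }
  destruct (word_of_comb T Oc') as [w' [Ow' [Lw' Vw']]].
  destruct (eval_word_in_W w' (Hletters w' Ow')) as [Lw'' Sw''].
  assert (Ew' : eval_word G w' = h).
  { apply wreath_ext; [|rewrite Sw''; symmetry; apply HW, Hh].
    intros v. rewrite Lw'', Vw', Vc', <- Lw, Ew. reflexivity. }
  assert (Hnorm : l1_norm l (comb_value (comb_of_word w)) = sumZ (fun v => Z.abs (lamp h v)) l).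
  { apply sumZ_ext_in. intros v _. rewrite <- Lw, Ew. reflexivity. }
  assert (Hlow := sum_abs_lamp_le_word_length hSK h Hl). rewrite <- Hnorm in Hlow.
  assert (Hle : word_length G T h <= length w') by (rewrite <- Ew'; apply word_length_le, Ow').
  assert (0 <= l1_norm l (comb_value (comb_of_word w)))%Z by apply l1_norm_nonneg.
  assert (C * l1_norm l (comb_value (comb_of_word w)) <= C * Z.of_nat (word_length G S h))%Z
    by (apply Z.mul_le_mono_nonneg_l; assumption).
  lia.
Qed.

Lemma dist_subgroup_W (H : G -> Prop) (T : list G) : is_subgroup G H -> (forall g, H g -> inW g) ->
  generates G T H -> simeq (dist G S H T) (fun n => n).
Proof.
  intros HH HW HT. destruct (word_length_W_le HW HT) as [C HC].
  split; [|apply preceq_id].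
  exists (Datatypes.S C). split; [lia|]. intros n.
  destruct (@dist_spec G S H T n (gone G)) as [[g [Hg [Lg <-]]] _].
  - intros g _. apply reachable_wreath, hSK.
  - apply HH.
  - rewrite word_length_one. lia.
  - specialize (HC g Hg). nia.
Qed.

End SubgroupsOfW.

Definition grows_linearly (K : Grp) (SK : list K) (psi : Z -> wreath K) : Prop :=
  exists c, forall a, Z.abs_nat a <= c * word_length (wreath K) (wr_gens K SK) (psi a) + c.

Section CyclicImages.
Variable K : Grp.
Notation G := (wreath K).
Notation e := (gone K).

Lemma wreath_inv_unique (x y : G) : gmul G y x = gone G -> y = ginv G x.
Proof.
  intros H. assert (Hs : snd y = ginv K (snd x)).
  { apply (f_equal snd) in H. rewrite snd_mul in H. apply (mulg_cancel_r (snd x)). rewrite H, mulVg. reflexivity. }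
  apply wreath_ext; [intros v|exact Hs].
  assert (Hl := f_equal (fun z => lamp z v) H). cbv beta in Hl. rewrite lamp_mul in Hl.
  change (lamp (gone G) v) with 0%Z in Hl. rewrite lamp_inv, Hs, invgK in *. lia.
Qed.

Variable psi : Z -> G.
Hypothesis psi_add : forall a b, psi (a + b)%Z = gmul G (psi a) (psi b).

Lemma psi_zero : psi 0%Z = gone G.
Proof.
  assert (H := psi_add 0 0). simpl Z.add in H.
  assert (Hs : snd (psi 0%Z) = e).
  { apply (f_equal snd) in H. rewrite snd_mul in H. apply (mulg_cancel_l (snd (psi 0%Z))).
    rewrite <- H, mulg1. reflexivity. }
  apply wreath_ext; [intros v|exact Hs].
  assert (Hl := f_equal (fun z => lamp z v) H). cbv beta in Hl.
  rewrite lamp_mul, Hs, invg1, mulg1 in Hl. change (lamp (gone G) v) with 0%Z. lia.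
Qed.

Lemma psi_opp a : psi (- a)%Z = ginv G (psi a).
Proof. apply wreath_inv_unique. rewrite <- psi_add, Z.add_opp_diag_l. apply psi_zero. Qed.

Definition in_image (g : G) : Prop := exists n, psi n = g.

Lemma generates_image : generates G [psi 1%Z] in_image.
Proof.
  assert (Hrep : forall b k, eval_word G (repeat (b, psi 1%Z) k) =
                             psi (if b then - Z.of_nat k else Z.of_nat k)%Z).
  { intros b k. induction k as [|k IH]; [destruct b; symmetry; apply psi_zero|].
    cbn [repeat]. rewrite eval_word_cons, IH. destruct b; cbn [letter fst snd].
    - rewrite <- psi_opp, <- psi_add. f_equal. lia.
    - rewrite <- psi_add. f_equal. lia. }
  split; [intros t [<-|[]]; exists 1%Z; reflexivity|]. intros g. split.
  - intros [n <-]. exists (repeat ((n <? 0)%Z, psi 1%Z) (Z.abs_nat n)). split.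
    + intros p Hp. apply repeat_spec in Hp. subst p. left. reflexivity.
    + rewrite Hrep. f_equal. destruct (Z.ltb_spec n 0); lia.
  - intros [w [Ow <-]]. induction w as [|[b y] w IH]; [exists 0%Z; apply psi_zero|].
    destruct (word_over_cons_inv Ow) as [Hy Ow']. destruct (IH Ow') as [n En].
    destruct Hy as [Hy|[]]. simpl in Hy. subst y. rewrite eval_word_cons, <- En.
    destruct b; cbn [letter fst snd]; [exists (Z.opp 1 + n)%Z; rewrite psi_add, psi_opp|exists (1 + n)%Z; rewrite psi_add];
      reflexivity.
Qed.

Definition preimage (t : G) : Z := epsilon (inhabits 0%Z) (fun n => psi n = t).

Lemma psi_preimage t : in_image t -> psi (preimage t) = t.
Proof. intros H. exact (epsilon_spec (inhabits 0%Z) (fun n => psi n = t) H). Qed.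

Definition word_exponent (w : list (bool * G)) : Z :=
  sumZ (fun p : bool * G => ((if fst p then (-1) else 1) * preimage (snd p))%Z) w.

Lemma word_exponent_app w1 w2 : word_exponent (w1 ++ w2) = (word_exponent w1 + word_exponent w2)%Z.
Proof. apply sumZ_app. Qed.

Variable T : list G.
Hypothesis HT : generates G T in_image.

(* Along words over [T] the magma product is computed in Z, where it is associative. *)
Lemma eval_word_image w : word_over G T w -> eval_word G w = psi (word_exponent w).
Proof.
  induction w as [|[b t] w IH]; intros Ow; [symmetry; apply psi_zero|].
  destruct (word_over_cons_inv Ow) as [Ht Ow']. apply (proj1 HT) in Ht.
  rewrite eval_word_cons, IH by exact Ow'. unfold word_exponent; cbn [sumZ fst snd].
  fold (word_exponent w). rewrite psi_add. f_equal.
  destruct b; cbn [letter fst snd].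
  - rewrite <- (psi_preimage Ht) at 1. rewrite <- psi_opp. reflexivity.
  - rewrite Z.mul_1_l. symmetry. exact (psi_preimage Ht).
Qed.

Definition flip_word (w : list (bool * G)) := map (fun p => (negb (fst p), snd p)) w.

Lemma flip_word_spec w : word_over G T w ->
  word_over G T (flip_word w) /\ length (flip_word w) = length w /\
  word_exponent (flip_word w) = (- word_exponent w)%Z.
Proof.
  intros Ow. split; [|split; [apply length_map|]].
  - intros p Hp. apply in_map_iff in Hp as [q [<- Hq]]. exact (Ow q Hq).
  - unfold word_exponent, flip_word. clear. induction w as [|[b t] w IH]; [reflexivity|].
    cbn [map sumZ fst snd]. rewrite IH. destruct b; cbn [negb]; ring.
Qed.

Fixpoint repeat_word (w : list (bool * G)) (n : nat) : list (bool * G) :=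
  match n with O => [] | Datatypes.S n' => w ++ repeat_word w n' end.

Lemma repeat_word_spec w n : word_over G T w ->
  word_over G T (repeat_word w n) /\ length (repeat_word w n) = n * length w /\
  word_exponent (repeat_word w n) = (Z.of_nat n * word_exponent w)%Z.
Proof.
  intros Ow. induction n as [|n [O [L E]]]; [split; [intros p []|split; reflexivity]|].
  cbn [repeat_word]. split; [apply word_over_app; assumption|].
  rewrite length_app, word_exponent_app, L, E, Nat2Z.inj_succ. split; [lia|ring].
Qed.

Hypothesis psi_inj : forall a b, psi a = psi b -> a = b.

Lemma word_length_image_comparable : exists A, 1 <= A /\ forall a,
  word_length G T (psi a) <= A * Z.abs_nat a /\ Z.abs_nat a <= A * word_length G T (psi a).
Proof.
  destruct (proj1 (proj2 HT (psi 1%Z)) (ex_intro _ 1%Z eq_refl)) as [w1 [O1 E1]].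
  assert (X1 : word_exponent w1 = 1%Z) by (apply psi_inj; rewrite <- eval_word_image; auto).
  set (M := sumZ (fun t => Z.abs (preimage t)) T).
  assert (HM0 : (0 <= M)%Z) by (apply sumZ_nonneg; intros; lia).
  assert (HM : forall w, word_over G T w -> (Z.abs (word_exponent w) <= M * Z.of_nat (length w))%Z).
  { induction w as [|[b t] w IH]; intros Ow; [simpl; lia|].
    destruct (word_over_cons_inv Ow) as [Ht Ow'].
    assert (Z.abs (preimage t) <= M)%Z
      by (apply sumZ_ge_elem with (f := fun t => Z.abs (preimage t)); auto; intros; lia).
    specialize (IH Ow'). unfold word_exponent in *; cbn [sumZ fst snd length].
    rewrite Nat2Z.inj_succ. destruct b; lia. }
  exists (Datatypes.S (length w1 + Z.to_nat M)). split; [lia|]. intros a. split.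
  - set (w0 := if (a <? 0)%Z then flip_word w1 else w1).
    assert (Hw0 : word_over G T w0 /\ length w0 = length w1 /\
                  word_exponent w0 = (if (a <? 0)%Z then -1 else 1)%Z).
    { unfold w0. destruct (a <? 0)%Z; [|auto].
      destruct (flip_word_spec O1) as [O [L E]]. rewrite E, X1. auto. }
    destruct Hw0 as [O0 [L0 X0]].
    destruct (repeat_word_spec (Z.abs_nat a) O0) as [O [L E]].
    assert (Ew : eval_word G (repeat_word w0 (Z.abs_nat a)) = psi a).
    { rewrite eval_word_image, E, X0 by exact O. f_equal. destruct (Z.ltb_spec a 0); lia. }
    rewrite <- Ew. eapply Nat.le_trans; [apply word_length_le, O|]. rewrite L, L0. nia.
  - destruct (word_length_spec (proj1 (proj2 HT (psi a)) (ex_intro _ a eq_refl))) as [[w [Ow [Lw Ew]]] _].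
    assert (Xw : word_exponent w = a) by (apply psi_inj; rewrite <- eval_word_image; auto).
    specialize (HM w Ow). rewrite Xw, Lw in HM. nia.
Qed.

Variable SK : list K.
Hypothesis hSK : generates K SK (fun _ => True).
Notation S := (wr_gens K SK).

Lemma dist_image_spec n : is_dist_value G S in_image T n (dist G S in_image T n).
Proof.
  apply (@dist_spec G S in_image T n (gone G)).
  - intros g _. apply reachable_wreath, hSK.
  - exists 0%Z. apply psi_zero.
  - rewrite word_length_one. lia.
Qed.

Lemma dist_image_linear : grows_linearly SK psi -> preceq (dist G S in_image T) (fun n => n).
Proof.
  intros [c Hc]. destruct word_length_image_comparable as [A [HA HB]].
  exists (Datatypes.S (A * c)). split; [lia|]. intros n.
  destruct (dist_image_spec n) as [[g [[a <-] [Lg <-]]] _].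
  destruct (HB a) as [H1 _]. specialize (Hc a). nia.
Qed.

End CyclicImages.
Arguments psi_zero {K psi}. Arguments psi_opp {K psi}. Arguments generates_image {K psi}.

Lemma dist_image_preceq (K : Grp) (SK : list K) (hSK : generates K SK (fun _ => True))
  (psi1 psi2 : Z -> wreath K) (T1 T2 : list (wreath K)) :
  (forall a b, psi1 (a + b)%Z = gmul (wreath K) (psi1 a) (psi1 b)) ->
  (forall a b, psi1 a = psi1 b -> a = b) ->
  (forall a b, psi2 (a + b)%Z = gmul (wreath K) (psi2 a) (psi2 b)) ->
  (forall a b, psi2 a = psi2 b -> a = b) ->
  generates (wreath K) T1 (in_image psi1) -> generates (wreath K) T2 (in_image psi2) ->
  (exists C, forall a, word_length (wreath K) (wr_gens K SK) (psi2 a) <=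
                       C * word_length (wreath K) (wr_gens K SK) (psi1 a) + C) ->
  preceq (dist (wreath K) (wr_gens K SK) (in_image psi1) T1)
         (dist (wreath K) (wr_gens K SK) (in_image psi2) T2).
Proof.
  intros add1 inj1 add2 inj2 HT1 HT2 [C HC].
  destruct (word_length_image_comparable add1 HT1 inj1) as [A1 [HA1 B1]].
  destruct (word_length_image_comparable add2 HT2 inj2) as [A2 [HA2 B2]].
  set (C' := Datatypes.S (A1 * A2 + C)).
  exists C'. split; [lia|]. intros n.
  destruct (dist_image_spec psi1 add1 T1 hSK n) as [[g [[a <-] [Lg <-]]] _].
  assert (Hle := proj2 (dist_image_spec psi2 add2 T2 hSK (C' * n + C')) (psi2 a) (ex_intro _ a eq_refl)).
  specialize (HC a). specialize (Hle ltac:(unfold C' in *; nia)).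
  destruct (B1 a) as [Z1 _]. destruct (B2 a) as [_ Z2]. unfold C' in *. nia.
Qed.

Section Coboundaries.
Variable K : Grp.
Variable SK : list K.
Hypothesis hSK : generates K SK (fun _ => True).
Notation G := (wreath K).
Notation S := (wr_gens K SK).
Notation m := (gmul K).
Notation i := (ginv K).

(* Such an [x] is the cursor [snd x] conjugated by the configuration [g], hence costs at most a
   constant (writing [g] and [-g]) plus a bounded multiple of the length of its cursor. *)
Lemma word_length_coboundary_le (g : K -> Z) (P : list K) : (forall v, g v <> 0%Z -> In v P) ->
  exists C0, forall x : G, (forall v, lamp x v = (g v - g (m v (i (snd x))))%Z) ->
    word_length G S x <= C0 + 3 * word_length K SK (snd x).
Proof.
  intros HP.
  destruct (exists_word_with_lamps hSK P g HP) as [w1 [O1 L1]].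
  destruct (exists_word_with_lamps hSK P (fun v => (- g v)%Z)) as [w2 [O2 L2]].
  { intros v Hv. apply HP. lia. }
  set (r := rev_cursor w1).
  exists (2 * (length w1 + length w2 + word_length K SK r)). intros x Hx.
  destruct (shortest_word hSK (m (snd x) (i r))) as [a [Oa [La Ea]]].
  set (W := w1 ++ (lift_word (rev a) ++ w2)).
  assert (OW : word_over G S W)
    by (repeat apply word_over_app; auto using word_over_gens_lift, word_over_rev).
  assert (HL : forall v, lamp x v = lamp (eval_word G W) v).
  { intros v. unfold W.
    rewrite Hx, !lamp_eval_app, L1, eval_lift_word, lamp_embK, L2, rev_cursor_lift_word,
      rev_involutive, Ea.
    fold r. rewrite invgM, invgK, (mulA K (m v (i r)) r), mulgKV. lia. }
  assert (H := word_length_wreath_le hSK x OW HL).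
  unfold W in H. rewrite !length_app, length_lift_word, length_rev, La in H.
  assert (H1 := word_length_mulg hSK (snd x) (i r)). rewrite (word_length_invg hSK) in H1. lia.
Qed.

End Coboundaries.
Arguments word_length_coboundary_le {K SK}.

Definition ind (P : Prop) : Z := if excluded_middle_informative P then 1%Z else 0%Z.

Lemma ind_true (P : Prop) : P -> ind P = 1%Z.
Proof. unfold ind. destruct (excluded_middle_informative P); tauto. Qed.
Lemma ind_false (P : Prop) : ~ P -> ind P = 0%Z.
Proof. unfold ind. destruct (excluded_middle_informative P); tauto. Qed.
Lemma ind_iff (P Q : Prop) : (P <-> Q) -> ind P = ind Q.
Proof.
  intros H. unfold ind.
  destruct (excluded_middle_informative P), (excluded_middle_informative Q); tauto.
Qed.

Lemma sumZ_mul_ind_eq (A : Type) (f : A -> Z) l v : NoDup l ->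
  sumZ (fun u => (f u * ind (v = u))%Z) l = (f v * ind (In v l))%Z.
Proof.
  induction 1 as [|a l Ha Hl IH]; cbn [sumZ]; [rewrite ind_false by (intros []); lia|].
  rewrite IH. destruct (classic (v = a)) as [<-|Nv].
  - rewrite (ind_true (eq_refl v)), (ind_true (or_introl eq_refl : In v (v :: l))), (ind_false Ha).
    lia.
  - assert (E : In v (a :: l) <-> In v l) by (simpl; split; [intros [->|H]; [congruence|exact H]|auto]).
    rewrite (ind_false Nv), (ind_iff E). lia.
Qed.

Lemma sumZ_nonzero (A : Type) (f : A -> Z) l : sumZ f l <> 0%Z -> exists a, In a l /\ f a <> 0%Z.
Proof.
  induction l as [|a l IH]; simpl; intros H; [lia|].
  destruct (Z.eq_dec (f a) 0) as [E|E]; [|eauto].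
  destruct IH as [b [Hb Hf]]; [lia|]. eauto.
Qed.

Lemma bounded_on_range (F : Z -> Z) (n : nat) :
  exists R, (0 <= R)%Z /\ forall r, (0 <= r < Z.of_nat n)%Z -> (Z.abs (F r) <= R)%Z.
Proof.
  induction n as [|n [R [HR IH]]]; [exists 0%Z; split; [lia|intros; lia]|].
  exists (Z.max R (Z.abs (F (Z.of_nat n)))). split; [lia|]. intros r Hr.
  destruct (Z.eq_dec r (Z.of_nat n)) as [->|N]; [lia|]. assert (Z.abs (F r) <= R)%Z by (apply IH; lia). lia.
Qed.

Lemma functional_bound (A : Type) (R : A -> A -> Z -> Prop) :
  (forall x y j j', R x y j -> R x y j' -> j = j') -> forall l1 l2 : list A,
  exists D, (0 <= D)%Z /\ forall x y j, In x l1 -> In y l2 -> R x y j -> (Z.abs j <= D)%Z.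
Proof.
  intros HR l1 l2. induction l1 as [|x l1 [D1 [HD1 IH1]]]; [exists 0%Z; split; [lia|intros x y j []]|].
  assert (exists D, (0 <= D)%Z /\ forall y j, In y l2 -> R x y j -> (Z.abs j <= D)%Z) as [D2 [HD2 H2]].
  { clear IH1. induction l2 as [|y l2 [D [HD IH]]]; [exists 0%Z; split; [lia|intros y j []]|].
    destruct (classic (exists j, R x y j)) as [[j0 Hj0]|N].
    - exists (Z.max D (Z.abs j0)). split; [lia|]. intros y' j [<-|Hy'] Hj.
      + rewrite (HR _ _ _ _ Hj Hj0). lia.
      + specialize (IH y' j Hy' Hj). lia.
    - exists D. split; [exact HD|]. intros y' j [<-|Hy'] Hj; [exfalso; eauto|eauto]. }
  exists (Z.max D1 D2). split; [lia|]. intros x' y j [<-|Hx'] Hy Hj.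
  - specialize (H2 y j Hy Hj). lia.
  - specialize (IH1 x' y j Hx' Hy Hj). lia.
Qed.

Section CyclicSubgroup.
Variable K : Grp.
Variable SK : list K.
Hypothesis hSK : generates K SK (fun _ => True).
Notation G := (wreath K).
Notation S := (wr_gens K SK).
Notation m := (gmul K).
Notation i := (ginv K).
Notation e := (gone K).

Variable phi : Z -> G.
Hypothesis phi_add : forall a b, phi (a + b)%Z = gmul G (phi a) (phi b).
Hypothesis phi_inj : forall a b, phi a = phi b -> a = b.

Definition cursor (a : Z) : K := snd (phi a).
Definition lamps (a : Z) : K -> Z := lamp (phi a).

Lemma cursor_add a b : cursor (a + b) = m (cursor a) (cursor b).
Proof. unfold cursor. rewrite phi_add. apply snd_mul. Qed.
Lemma cursor_zero : cursor 0 = e.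
Proof. unfold cursor. rewrite (psi_zero phi_add). reflexivity. Qed.
Lemma cursor_opp a : cursor (- a) = i (cursor a).
Proof. unfold cursor. rewrite (psi_opp phi_add). reflexivity. Qed.
Lemma mul_cursor v a b : m (m v (cursor a)) (cursor b) = m v (cursor (a + b)).
Proof. rewrite cursor_add, mulA. reflexivity. Qed.
Lemma lamps_add a b v : lamps (a + b) v = (lamps a v + lamps b (m v (cursor (- a))))%Z.
Proof. unfold lamps. rewrite phi_add, lamp_mul, cursor_opp. reflexivity. Qed.
Lemma lamps_zero v : lamps 0 v = 0%Z.
Proof. unfold lamps. rewrite (psi_zero phi_add). reflexivity. Qed.

Lemma cursor_kernel_nontrivial : ~ (forall a b, cursor a = cursor b -> a = b) ->
  exists p, p <> 0%Z /\ cursor p = e.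
Proof.
  intros Hninj. apply NNPP. intros N. apply Hninj. intros a b E. apply NNPP. intros Nab.
  apply N. exists (a - b)%Z. split; [lia|].
  unfold Z.sub. rewrite cursor_add, cursor_opp, E. apply mulgV.
Qed.

Lemma cursor_period : (exists p, p <> 0%Z /\ cursor p = e) ->
  exists p, (0 < p)%Z /\ forall j, cursor (p * j) = e.
Proof.
  intros [p0 [Hp0 Ep0]].
  assert (exists p, (0 < p)%Z /\ cursor p = e) as [p [Hp Ep]].
  { destruct (Z_lt_le_dec 0 p0); [eauto|]. exists (- p0)%Z. split; [lia|].
    rewrite cursor_opp, Ep0. apply invg1. }
  exists p. split; [exact Hp|]. apply Z.peano_ind.
  - rewrite Z.mul_0_r. apply cursor_zero.
  - intros j IH. rewrite Z.mul_succ_r, cursor_add, IH, Ep. apply mul1g.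
  - intros j IH. rewrite Z.mul_pred_r, <- Z.add_opp_r, cursor_add, IH, cursor_opp, Ep, invg1. apply mul1g.
Qed.

Lemma lamps_mul_period p u : (forall j, cursor (p * j) = e) ->
  forall j, lamps (p * j) u = (j * lamps p u)%Z.
Proof.
  intros Hp.
  assert (Hshift : forall j b, lamps (p * j + b) u = (lamps (p * j) u + lamps b u)%Z).
  { intros j b. rewrite lamps_add, <- Z.mul_opp_r, Hp, mulg1. reflexivity. }
  apply Z.peano_ind.
  - rewrite Z.mul_0_r, lamps_zero. lia.
  - intros j IH. rewrite Z.mul_succ_r, Hshift, IH. lia.
  - intros j IH. assert (H := Hshift (Z.pred j) p).
    rewrite <- Z.mul_succ_r, Z.succ_pred, IH in H. nia.
Qed.

(* For a period [p], [phi (p * j)] has lamps [j * lamps p], with [lamps p <> 0] by injectivity. *)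
Lemma linear_growth_of_cursor_period : (exists p, p <> 0%Z /\ cursor p = e) -> grows_linearly SK phi.
Proof.
  intros Hper. destruct (cursor_period Hper) as [p [Hp Hpj]].
  assert (exists u, lamps p u <> 0%Z) as [u Hu].
  { apply NNPP. intros N. assert (p = 0%Z); [|lia].
    apply phi_inj. rewrite (psi_zero phi_add). apply wreath_ext.
    - intros v. change (lamp (gone G) v) with 0%Z.
      destruct (Z.eq_dec (lamps p v) 0) as [E|E]; [exact E|exfalso; eauto].
    - change (cursor p = e). rewrite <- (Z.mul_1_r p). apply Hpj. }
  destruct (bounded_on_range (fun r => lamps r u) (Z.to_nat p)) as [R [HR0 HR]].
  exists (Z.to_nat p * (Z.to_nat R + 1)). intros a.
  assert (Ea := Z.div_mod a p ltac:(lia)). assert (Hr := Z.mod_pos_bound a p Hp).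
  set (j := (a / p)%Z) in *. set (r := (a mod p)%Z) in *.
  assert (HLa : lamps a u = (j * lamps p u + lamps r u)%Z).
  { rewrite Ea, lamps_add, <- Z.mul_opp_r, Hpj, mulg1, (lamps_mul_period p u Hpj). reflexivity. }
  assert (Hb := HR r ltac:(lia)).
  assert (Hn := abs_lamp_le_word_length hSK (phi a) u). change (lamp (phi a) u) with (lamps a u) in Hn.
  set (N := word_length G S (phi a)) in *.
  assert (Z.abs j <= Z.abs (j * lamps p u))%Z by (rewrite Z.abs_mul; nia).
  assert (Z.abs a <= p * (Z.of_nat N + R) + p)%Z by nia.
  assert (Z.of_nat (Z.to_nat p * (Z.to_nat R + 1) * N + Z.to_nat p * (Z.to_nat R + 1)) =
          p * (R + 1) * Z.of_nat N + p * (R + 1))%Z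
    by (rewrite Nat2Z.inj_add, !Nat2Z.inj_mul, Nat2Z.inj_add; lia).
  nia.
Qed.

Section InjectiveCursor.
Hypothesis cursor_inj : forall a b, cursor a = cursor b -> a = b.
Variable l : list K.
Hypothesis l_nodup : NoDup l.
Hypothesis l_supp : forall v, lamps 1 v <> 0%Z -> In v l.
Variable D : Z.
Hypothesis D_nonneg : (0 <= D)%Z.
Hypothesis D_bound : forall u u' j, In u l -> In u' l -> u' = m u (cursor j) -> (Z.abs j <= D)%Z.

Definition ahead_of (v u : K) : Prop := exists n, (0 <= n)%Z /\ m v (cursor (- n)) = u.

(* [lamps] is the coboundary of [potential] along the cursor: the lamps of [phi 1] at [u]
   are collected at every point ahead of [u] on its cursor orbit. *)
Definition potential (v : K) : Z := sumZ (fun u => (lamps 1 u * ind (ahead_of v u))%Z) l.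

Definition orbit_sum (u : K) : Z :=
  sumZ (fun u' => (lamps 1 u' * ind (exists j, u' = m u (cursor j)))%Z) l.

Lemma ind_ahead_of v u :
  ind (ahead_of v u) = (ind (v = u) + ind (ahead_of (m v (cursor (-1))) u))%Z.
Proof.
  destruct (classic (v = u)) as [<-|Nv].
  - rewrite (ind_true (eq_refl v)), ind_true, ind_false; [reflexivity| |].
    + intros [n [Hn E]]. rewrite mul_cursor in E. rewrite <- (mulg1 K v) in E at 2.
      apply mulg_cancel_l in E. rewrite <- cursor_zero in E. apply cursor_inj in E. lia.
    + exists 0%Z. split; [lia|]. rewrite Z.opp_0, cursor_zero, mulg1. reflexivity.
  - rewrite (ind_false Nv). apply ind_iff. split.
    + intros [n [Hn E]]. destruct (Z.eq_dec n 0) as [->|Nz].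
      * rewrite Z.opp_0, cursor_zero, mulg1 in E. contradiction.
      * exists (n - 1)%Z. split; [lia|]. rewrite mul_cursor, <- E. do 2 f_equal. lia.
    + intros [n [Hn E]]. exists (n + 1)%Z. split; [lia|]. rewrite <- E, mul_cursor. do 2 f_equal. lia.
Qed.

Lemma potential_step v : (potential v - potential (m v (cursor (-1))))%Z = lamps 1 v.
Proof.
  unfold potential.
  rewrite (sumZ_ext_in _ (fun u => lamps 1 u * ind (v = u) +
                                   lamps 1 u * ind (ahead_of (m v (cursor (-1))) u))%Z)
    by (intros u _; rewrite ind_ahead_of; ring).
  rewrite sumZ_add, (sumZ_mul_ind_eq _ _ l_nodup).
  destruct (classic (In v l)) as [Hv|Hv]; [rewrite (ind_true Hv); lia|].
  rewrite (ind_false Hv). destruct (Z.eq_dec (lamps 1 v) 0) as [E|E]; [lia|].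
  exfalso. exact (Hv (l_supp v E)).
Qed.

Lemma lamps_coboundary a v : lamps a v = (potential v - potential (m v (cursor (- a))))%Z.
Proof.
  revert a v. apply (Z.peano_ind (fun a => forall v, lamps a v = (potential v - potential (m v (cursor (- a))))%Z)).
  - intros v. rewrite lamps_zero, Z.opp_0, cursor_zero, mulg1. lia.
  - intros a IH v. rewrite <- Z.add_1_r, lamps_add, IH.
    rewrite <- (potential_step (m v (cursor (- a)))), mul_cursor.
    replace (- a + -1)%Z with (- (a + 1))%Z by lia. lia.
  - intros a IH v. assert (H := lamps_add (Z.pred a) 1 v).
    replace (Z.pred a + 1)%Z with a in H by lia.
    rewrite IH, <- (potential_step (m v (cursor (- Z.pred a)))), mul_cursor in H.
    replace (- Z.pred a + -1)%Z with (- a)%Z in H by lia. lia.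
Qed.

Lemma potential_far_ahead u a : In u l -> (D <= a)%Z -> potential (m u (cursor a)) = orbit_sum u.
Proof.
  intros Hu Ha. apply sumZ_ext_in. intros u' Hu'. f_equal. apply ind_iff. split.
  - intros [n [Hn E]]. exists (a + - n)%Z. rewrite <- E, mul_cursor. reflexivity.
  - intros [j E]. assert (Hj := @D_bound u u' j Hu Hu' E). exists (a - j)%Z. split; [lia|].
    rewrite E, mul_cursor. do 2 f_equal. lia.
Qed.

Lemma potential_far_behind u a : In u l -> (a < - D)%Z -> potential (m u (cursor a)) = 0%Z.
Proof.
  intros Hu Ha. unfold potential. rewrite <- (sumZ_zero l). apply sumZ_ext_in. intros u' Hu'.
  rewrite ind_false; [lia|]. intros [n [Hn E]]. rewrite mul_cursor in E. symmetry in E.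
  assert (Hj := @D_bound u u' _ Hu Hu' E). lia.
Qed.

(* A nonzero orbit sum leaves a lamp lit at every point of the orbit between [-D] and [a - D]. *)
Lemma linear_growth_of_orbit_sum u : In u l -> orbit_sum u <> 0%Z -> grows_linearly SK phi.
Proof.
  intros Hu HS. exists (Z.to_nat (2 * D) + 1). intros a.
  set (x0 := if (0 <=? a)%Z then D else (D + a)%Z).
  set (P := map (fun k => m u (cursor (x0 + Z.of_nat k))) (seq 0 (Z.to_nat (Z.abs a - 2 * D)))).
  assert (NP : NoDup P).
  { apply NoDup_map_inj; [|apply seq_NoDup]. intros k1 k2 E. apply mulg_cancel_l, cursor_inj in E. lia. }
  assert (Hlow := sum_abs_lamp_le_word_length hSK (phi a) NP).
  assert (H1 : (sumZ (fun _ => 1%Z) P <= sumZ (fun v => Z.abs (lamp (phi a) v)) P)%Z).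
  { apply sumZ_le. intros v Hv. apply in_map_iff in Hv as [k [<- Hk]]. apply in_seq in Hk.
    change (lamp (phi a) (m u (cursor (x0 + Z.of_nat k)))) with (lamps a (m u (cursor (x0 + Z.of_nat k)))).
    rewrite lamps_coboundary, mul_cursor. unfold x0. destruct (Z.leb_spec 0 a).
    - rewrite potential_far_ahead, potential_far_behind; auto; lia.
    - rewrite potential_far_ahead with (a := (D + a + Z.of_nat k + - a)%Z), potential_far_behind; auto; lia. }
  assert (LP : length P = Z.to_nat (Z.abs a - 2 * D)) by (unfold P; rewrite length_map, length_seq; reflexivity).
  rewrite sumZ_const1, LP in H1.
  assert (Z.of_nat ((Z.to_nat (2 * D) + 1) * word_length G S (phi a) + (Z.to_nat (2 * D) + 1)) =
          (2 * D + 1) * Z.of_nat (word_length G S (phi a)) + (2 * D + 1))%Z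
    by (rewrite Nat2Z.inj_add, !Nat2Z.inj_mul, Nat2Z.inj_add; lia).
  nia.
Qed.

Lemma potential_supported : (forall u, In u l -> orbit_sum u = 0%Z) -> forall v, potential v <> 0%Z ->
  In v (flat_map (fun u => map (fun k => m u (cursor (Z.of_nat k))) (seq 0 (Z.to_nat D))) l).
Proof.
  intros H0 v Hv. destruct (sumZ_nonzero _ _ Hv) as [u [Hu Hf]].
  assert (Hp : ahead_of v u) by (apply NNPP; intros N; rewrite ind_false in Hf by exact N; lia).
  destruct Hp as [n [Hn E]].
  assert (Ev : v = m u (cursor n)) by (rewrite <- E, mul_cursor, Z.add_opp_diag_l, cursor_zero, mulg1; reflexivity).
  destruct (Z_lt_le_dec n D) as [Lt|Ge].
  - apply in_flat_map. exists u. split; [exact Hu|]. apply in_map_iff. exists (Z.to_nat n).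
    split; [rewrite Ev; do 2 f_equal; lia|apply in_seq; lia].
  - exfalso. apply Hv. rewrite Ev, potential_far_ahead; auto.
Qed.

End InjectiveCursor.

Lemma cursor_injective_dichotomy : (forall a b, cursor a = cursor b -> a = b) ->
  grows_linearly SK phi \/
  exists C0, forall a, word_length G S (phi a) <= C0 + 3 * word_length K SK (cursor a).
Proof.
  intros cursor_inj.
  destruct (proj2_sig (fst (phi 1%Z))) as [l0 Hl0].
  set (l := nodup (fun x y : K => excluded_middle_informative (x = y)) l0).
  assert (l_nodup : NoDup l) by apply NoDup_nodup.
  assert (l_supp : forall v, lamps 1 v <> 0%Z -> In v l) by (intros v Hv; apply nodup_In, Hl0, Hv).
  destruct (functional_bound (fun u u' j => u' = m u (cursor j))) with (l1 := l) (l2 := l)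
    as [D [D_nonneg D_bound]].
  { intros x y j j' -> E. apply cursor_inj, (mulg_cancel_l x), E. }
  destruct (classic (exists u, In u l /\ orbit_sum l u <> 0%Z)) as [[u [Hu HS]]|Hzero].
  - left. exact (linear_growth_of_orbit_sum cursor_inj l_nodup l_supp D_nonneg D_bound u Hu HS).
  - right.
    assert (Hsupp := potential_supported l D_bound
                       (fun u Hu => NNPP _ (fun N => Hzero (ex_intro _ u (conj Hu N))))).
    destruct (word_length_coboundary_le hSK (potential l) _ Hsupp) as [C0 HC0].
    exists C0. intros a. apply HC0. intros v.
    change (lamp (phi a) v) with (lamps a v). rewrite (lamps_coboundary cursor_inj l_nodup l_supp a v).
    rewrite cursor_opp. reflexivity.
Qed.

End CyclicSubgroup.
Arguments cursor_add {K phi}. Arguments cursor_kernel_nontrivial {K phi}.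
Arguments linear_growth_of_cursor_period {K SK} hSK {phi}. Arguments cursor_injective_dichotomy {K SK} hSK {phi}.

Lemma distorted_cyclic_subgroup_in_K (K : Grp) (SK : list K) (hSK : generates K SK (fun _ => True))
  (Hh : wreath K -> Prop) (Th : list (wreath K)) :
  iso_Z (wreath K) Hh -> generates (wreath K) Th Hh ->
  ~ simeq (dist (wreath K) (wr_gens K SK) Hh Th) (fun n => n) ->
  exists (H : wreath K -> Prop) (T : list (wreath K)),
    iso_Z (wreath K) H /\ (forall g, H g -> inK g) /\ generates (wreath K) T H /\
    simeq (dist (wreath K) (wr_gens K SK) H T) (dist (wreath K) (wr_gens K SK) Hh Th).
Proof.
  intros [phi [phi_add [phi_inj Hiff]]] HT Hdist.
  assert (EH : Hh = in_image phi).
  { apply functional_extensionality. intros g. apply propositional_extensionality. rewrite Hiff. reflexivity. }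
  subst Hh.
  assert (Hnonlinear : ~ grows_linearly SK phi).
  { intros Hlin. apply Hdist. split; [exact (dist_image_linear phi_add HT phi_inj hSK Hlin)|apply preceq_id]. }
  destruct (classic (forall a b, cursor phi a = cursor phi b -> a = b)) as [Kinj|Knot].
  2: { exfalso. apply Hnonlinear, (linear_growth_of_cursor_period hSK phi_add phi_inj).
       exact (cursor_kernel_nontrivial phi_add Knot). }
  destruct (cursor_injective_dichotomy hSK phi_add Kinj) as [Hlin|[C0 HC0]]; [contradiction|].
  set (psi := fun a => embK K (cursor phi a)).
  assert (psi_add : forall a b, psi (a + b)%Z = gmul (wreath K) (psi a) (psi b)).
  { intros a b. apply wreath_ext; [reflexivity|apply (cursor_add phi_add)]. }
  assert (psi_inj : forall a b, psi a = psi b -> a = b).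
  { intros a b E. apply Kinj, (f_equal snd E). }
  assert (Hpsi : forall a, word_length (wreath K) (wr_gens K SK) (psi a) = word_length K SK (cursor phi a))
    by (intros a; apply (word_length_embK hSK)).
  assert (Hcursor : forall a, word_length K SK (cursor phi a) <= word_length (wreath K) (wr_gens K SK) (phi a))
    by (intros a; apply (word_length_snd_le hSK)).
  exists (in_image psi), [psi 1%Z]. split; [|split; [|split]].
  - exists psi. split; [exact psi_add|split; [exact psi_inj|reflexivity]].
  - intros g [n <-]. exists (cursor phi n). reflexivity.
  - exact (generates_image psi_add).
  - pose proof (generates_image psi_add) as Hgen.
    split; apply (dist_image_preceq hSK); auto; exists (C0 + 3); intros a;
      specialize (HC0 a); specialize (Hpsi a); specialize (Hcursor a); lia.
Qed.

Theorem theorem1p2 (K : Grp) (SK : list K)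
  (hSK : generates K SK (fun _ => True)) :
  (forall (H : wreath K -> Prop) (T : list (wreath K)),
      is_subgroup (wreath K) H -> (forall g, H g -> @inW K g) ->
      generates (wreath K) T H ->
      simeq (dist (wreath K) (@wr_gens K SK) H T) (fun n => n)) /\
  (forall (H : K -> Prop) (T : list K),
      is_subgroup K H -> generates K T H ->
      simeq (dist (wreath K) (@wr_gens K SK) (fun g => exists k, H k /\ g = @embK K k)
                  (map (@embK K) T))
            (dist K SK H T)) /\
  simeq (dist (wreath K) (@wr_gens K SK) (@inK K) (map (@embK K) SK)) (fun n => n) /\
  (forall (Hh : wreath K -> Prop) (Th : list (wreath K)),
      iso_Z (wreath K) Hh -> generates (wreath K) Th Hh ->
      ~ simeq (dist (wreath K) (@wr_gens K SK) Hh Th) (fun n => n) ->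
      exists (H : wreath K -> Prop) (T : list (wreath K)),
        iso_Z (wreath K) H /\
        ((forall g, H g -> @inW K g) \/ (forall g, H g -> @inK K g)) /\
        generates (wreath K) T H /\
        simeq (dist (wreath K) (@wr_gens K SK) H T) (dist (wreath K) (@wr_gens K SK) Hh Th)).
Proof.
  split; [|split; [|split]].
  - intros H T HH HW HT. exact (dist_subgroup_W hSK HH HW HT).
  - intros H T HH HT. exact (dist_subgroup_K hSK HH HT).
  - exact (dist_K_undistorted hSK).
  - intros Hh Th Hiso HT Hdist.
    destruct (distorted_cyclic_subgroup_in_K hSK Hiso HT Hdist) as [H [T [HZ [HK [HTH Hsim]]]]].
    exists H, T. auto.
Qed.
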